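(* The reduction $\to_{\mathsf{se}}$ is sound: whenever $B\to_{\mathsf{se}}C$ and $\Phi$ is an $\mathsf{SKS}$ derivation with associated atomic flow $B$, there exists an $\mathsf{SKS}$ derivation $\Psi$ with associated atomic flow $C$ and with the same premiss and conclusion as $\Phi$.
   Context: Formulae are built from the units $\mathsf f$ and $\mathsf t$, atoms, disjunction $[\alpha\vee\beta]$ and conjunction $(\alpha\wedge\beta)$; on atoms there is an involution $a\mapsto\bar a$ with $\bar a\neq a$. An inference step of a rule $\alpha/\beta$ rewrites $\xi\{\alpha\}$ into $\xi\{\beta\}$ for an arbitrary context (formula with a hole) $\xi$. A derivation from $\alpha$ (premiss) to $\beta$ (conclusion) is a finite chain of steps from $\alpha$ to $\beta$. System $\mathsf{SKS}$: interaction $\mathsf t/[a\vee\bar a]$; weakening $\mathsf f/a$; contraction $[a\vee a]/a$; cut $(a\wedge\bar a)/\mathsf f$; coweakening $a/\mathsf t$; cocontraction $a/(a\wedge a)$; switch $(\alpha\wedge[\beta\vee\gamma])/[(\alpha\wedge\beta)\vee\gamma]$; medial $[(\alpha\wedge\beta)\vee(\gamma\wedge\delta)]/([\alpha\vee\gamma]\wedge[\beta\vee\delta])$; and $\gamma/\delta$ whenever $\gamma=\delta$ is (either direction of) an instance of commutativity or associativity of $\vee,\wedge$, $[\alpha\vee\mathsf f]=\alpha$, $(\alpha\wedge\mathsf t)=\alpha$, $[\mathsf t\vee\mathsf t]=\mathsf t$, $(\mathsf f\wedge\mathsf f)=\mathsf f$. An atomic flow is a tuple $(V,E,\eta,up,lo)$: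 finite vertex and edge sets, a labelling of vertices by interaction, cut, weakening, coweakening, contraction, cocontraction, and maps $up:E\to V\cup\{\top\}$, $lo:E\to V\cup\{\bot\}$. Upper edges of $\nu$: $lo(\epsilon)=\nu$; lower edges: $up(\epsilon)=\nu$. (Upper, lower) edge numbers: $(0,2)$ interaction, $(2,0)$ cut, $(0,1)$ weakening, $(1,0)$ coweakening, $(2,1)$ contraction, $(1,2)$ cocontraction; no directed cycles; a sign map $\pi:E\to\{+,-\}$ exists giving all edges of a (co)contraction the same sign and the two edges of an interaction/cut different signs. Edges with $up=\top$ ($lo=\bot$) are the upper (lower) edges of the flow. The atomic flow of an $\mathsf{SKS}$ derivation traces atom occurrences: occurrences in contexts and instantiated subformulae of switch, medial, $=$ keep their edge through a step; each step of an atomic rule gives a vertex with that label whose upper edges are the redex occurrences in the step's premiss and lower edges those in its conclusion; occurrences in the premiss/conclusion of the derivation have $up=\top$ / $lo=\bot$. Reduction $\to_{\mathsf{se}}$: let $B$ contain an edge $\epsilon$ from an interaction $\iota$ to a cut $\kappa$; let $\epsilon_2$ be the other lower edge of $\iota$ and $\epsilon_3$ the other upper edge of $\kappa$. Let $A$ be obtained from $B$ by deleting $\iota$, $\kappa$ and $\epsilon$, so that $\epsilon_2$ becomes an upper edge and $\epsilon_3$ a lower edge of $A$; let $\epsilon_1,\dots,\epsilon_h$ be the other upper edges and $\epsilon'_1,\dots,\epsilon'_k$ the other lower edges of $A$. Take disjoint copies $\tilde A$, $\hat A$ of $A$. Then $B\to_{\mathsf{se}}C$ where $C$ is formed by: making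 $\tilde\epsilon_2$ the lower edge of a new weakening; making $\hat\epsilon_3$ the upper edge of a new coweakening; identifying $\tilde\epsilon_3$ and $\hat\epsilon_2$ into a single edge (from the upper endpoint of $\tilde\epsilon_3$ to the lower endpoint of $\hat\epsilon_2$); for each $i\le h$ adding a cocontraction with upper edge $\epsilon_i$ and lower edges $\tilde\epsilon_i,\hat\epsilon_i$; for each $j\le k$ adding a contraction with upper edges $\tilde\epsilon'_j,\hat\epsilon'_j$ and lower edge $\epsilon'_j$. *)

From mathcomp Require Import all_boot.
Set Implicit Arguments. Unset Strict Implicit. Unset Printing Implicit Defensive.

(* Formulae over a generic type X of "atoms".  Plain SKS formulae use   *)
(* X = A (the atoms); annotated formulae use X = A * E, where the       *)
(* second component names the atomic-flow edge of the occurrence.      *)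
Inductive fml (X : Type) :=
| Ff | Ft | Atm of X | FOr of fml X & fml X | FAnd of fml X & fml X.
Arguments Ff {X}. Arguments Ft {X}.

Fixpoint fmap X Y (f : X -> Y) (a : fml X) : fml Y :=
  match a with
  | Ff => Ff | Ft => Ft | Atm x => Atm (f x)
  | FOr a b => FOr (fmap f a) (fmap f b)
  | FAnd a b => FAnd (fmap f a) (fmap f b)
  end.

Fixpoint fatoms X (a : fml X) : seq X :=
  match a with
  | Ff | Ft => [::] | Atm x => [:: x]
  | FOr a b | FAnd a b => fatoms a ++ fatoms b
  end.

Inductive ctx (X : Type) :=
| Hole
| COrL of ctx X & fml X | COrR of fml X & ctx X
| CAndL of ctx X & fml X | CAndR of fml X & ctx X.
Arguments Hole {X}.

Fixpoint plug X (c : ctx X) (a : fml X) : fml X :=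
  match c with
  | Hole => a
  | COrL c b => FOr (plug c a) b | COrR b c => FOr b (plug c a)
  | CAndL c b => FAnd (plug c a) b | CAndR b c => FAnd b (plug c a)
  end.

Fixpoint cmap X Y (f : X -> Y) (c : ctx X) : ctx Y :=
  match c with
  | Hole => Hole
  | COrL c b => COrL (cmap f c) (fmap f b) | COrR b c => COrR (fmap f b) (cmap f c)
  | CAndL c b => CAndL (cmap f c) (fmap f b) | CAndR b c => CAndR (fmap f b) (cmap f c)
  end.

Inductive eqax := ComOr | ComAnd | AssOr | AssAnd | UnitOr | UnitAnd | TOrT | FAndF.

Definition eq_lhs X (q : eqax) (a b c : fml X) : fml X :=
  match q with
  | ComOr => FOr a b | ComAnd => FAnd a b
  | AssOr => FOr (FOr a b) c | AssAnd => FAnd (FAnd a b) c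
  | UnitOr => FOr a Ff | UnitAnd => FAnd a Ft
  | TOrT => FOr Ft Ft | FAndF => FAnd Ff Ff
  end.
Definition eq_rhs X (q : eqax) (a b c : fml X) : fml X :=
  match q with
  | ComOr => FOr b a | ComAnd => FAnd b a
  | AssOr => FOr a (FOr b c) | AssAnd => FAnd a (FAnd b c)
  | UnitOr => a | UnitAnd => a
  | TOrT => Ft | FAndF => Ff
  end.

(* rule instances (the instantiation is recorded, so that the tracing  *)
(* of atom occurrences through a step is determined)                   *)
Inductive inst (X : Type) :=
| IInt of X & X
| IWk of X
| ICon of X & X & X
| ICut of X & X
| ICowk of X
| ICocon of X & X & X
| ISw of fml X & fml X & fml X
| IMed of fml X & fml X & fml X & fml X
| IEq of eqax & bool & fml X & fml X & fml X.  (* true: lhs/rhs, false: rhs/lhs *)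

Definition ipre X (i : inst X) : fml X :=
  match i with
  | IInt _ _ => Ft | IWk _ => Ff | ICon x y _ => FOr (Atm x) (Atm y)
  | ICut x y => FAnd (Atm x) (Atm y) | ICowk x => Atm x | ICocon x _ _ => Atm x
  | ISw a b c => FAnd a (FOr b c)
  | IMed a b c d => FOr (FAnd a b) (FAnd c d)
  | IEq q d a b c => if d then eq_lhs q a b c else eq_rhs q a b c
  end.
Definition icon X (i : inst X) : fml X :=
  match i with
  | IInt x y => FOr (Atm x) (Atm y) | IWk x => Atm x | ICon _ _ z => Atm z
  | ICut _ _ => Ff | ICowk _ => Ft | ICocon _ y z => FAnd (Atm y) (Atm z)
  | ISw a b c => FOr (FAnd a b) c
  | IMed a b c d => FAnd (FOr a c) (FOr b d)
  | IEq q d a b c => if d then eq_rhs q a b c else eq_lhs q a b c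
  end.

Definition imap X Y (f : X -> Y) (i : inst X) : inst Y :=
  match i with
  | IInt x y => IInt (f x) (f y) | IWk x => IWk (f x) | ICon x y z => ICon (f x) (f y) (f z)
  | ICut x y => ICut (f x) (f y) | ICowk x => ICowk (f x)
  | ICocon x y z => ICocon (f x) (f y) (f z)
  | ISw a b c => ISw (fmap f a) (fmap f b) (fmap f c)
  | IMed a b c d => IMed (fmap f a) (fmap f b) (fmap f c) (fmap f d)
  | IEq q d a b c => IEq q d (fmap f a) (fmap f b) (fmap f c)
  end.

Definition inst_ok A (bar : A -> A) (i : inst A) : Prop :=
  match i with
  | IInt x y => y = bar x
  | ICut x y => y = bar x
  | ICon x y z => y = x /\ z = x
  | ICocon x y z => y = x /\ z = x
  | _ => True
  end.

Definition step X := (ctx X * inst X)%type.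
Definition smap X Y (f : X -> Y) (s : step X) : step Y := (cmap f s.1, imap f s.2).
Definition dstep X : step X := (Hole, ISw Ff Ff Ff).

Inductive deriv X : fml X -> seq (step X) -> fml X -> Prop :=
| deriv_nil a : deriv a [::] a
| deriv_cons c i s b :
    deriv (plug c (icon i)) s b -> deriv (plug c (ipre i)) ((c, i) :: s) b.

Definition sks_deriv A (bar : A -> A) (a : fml A) (s : seq (step A)) (b : fml A) :=
  deriv a s b /\ (forall i, i < size s -> inst_ok bar (nth (dstep A) s i).2).

Inductive vlab := VInt | VCut | VWk | VCowk | VCon | VCocon.

Definition n_upper (l : vlab) : nat :=
  match l with VInt => 0 | VCut => 2 | VWk => 0 | VCowk => 1 | VCon => 2 | VCocon => 1 end.
Definition n_lower (l : vlab) : nat :=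
  match l with VInt => 2 | VCut => 0 | VWk => 1 | VCowk => 0 | VCon => 1 | VCocon => 2 end.

(* up e = None means up(e) = top, lo e = None means lo(e) = bottom *)
Record flow := Flow {
  fV : finType; fE : finType;
  lab : fV -> vlab;
  up : fE -> option fV;
  lo : fE -> option fV }.

Definition fadj (B : flow) : rel (fV B) :=
  fun v w => [exists e, (up e == Some v) && (lo e == Some w)].

Definition is_atomic_flow (B : flow) : Prop :=
  [/\ (forall v : fV B, #|[pred e | lo e == Some v]| = n_upper (lab v)
                     /\ #|[pred e | up e == Some v]| = n_lower (lab v)),
      (forall v w : fV B, fadj v w -> ~~ connect (@fadj B) w v) &
      exists pi : fE B -> bool,
        (forall (v : fV B) (e e' : fE B), (lab v = VCon \/ lab v = VCocon) ->
            (up e = Some v \/ lo e = Some v) -> (up e' = Some v \/ lo e' = Some v) ->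
            pi e = pi e')
     /\ (forall (v : fV B) (e e' : fE B), lab v = VInt ->
            up e = Some v -> up e' = Some v -> e != e' -> pi e != pi e')
     /\ (forall (v : fV B) (e e' : fE B), lab v = VCut ->
            lo e = Some v -> lo e' = Some v -> e != e' -> pi e != pi e')].

Definition flow_iso (B C : flow) : Prop :=
  exists (f : fV B -> fV C) (g : fE B -> fE C),
    [/\ bijective f, bijective g,
        (forall v, lab (f v) = lab v),
        (forall e, up (g e) = omap f (up e)) &
        (forall e, lo (g e) = omap f (lo e))].

(* B is the flow of the derivation (a, s) iff its atom occurrences can  *)
(* be labelled by the edges of B so that labels are kept by contexts     *)
(* and by instantiated subformulae of switch/medial/=, and the vertices *)
(* of B are in bijection with the atomic steps, the labels of the redex *)
(* occurrences of the premiss (conclusion) of a step being exactly the  *)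
(* upper (lower) edges of the corresponding vertex, the labels of the    *)
(* premiss (conclusion) of the derivation being exactly the edges with  *)
(* up = top (lo = bottom).                                              *)
Definition ilab X (i : inst X) : option vlab :=
  match i with
  | IInt _ _ => Some VInt | IWk _ => Some VWk | ICon _ _ _ => Some VCon
  | ICut _ _ => Some VCut | ICowk _ => Some VCowk | ICocon _ _ _ => Some VCocon
  | _ => None
  end.

Definition labels A E (a : fml (A * E)) : seq E := map snd (fatoms a).

Definition exact_labels (E : eqType) (l : seq E) (P : E -> Prop) : Prop :=
  uniq l /\ (forall e, e \in l <-> P e).

Definition flow_of A (a : fml A) (s : seq (step A)) (B : flow) : Prop :=
  exists (a' : fml (A * fE B)) (s' : seq (step (A * fE B))) (b' : fml (A * fE B))
         (phi : fV B -> nat),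
  [/\ fmap fst a' = a, map (smap fst) s' = s & deriv a' s' b'] /\
  [/\ injective phi,
      (forall v, phi v < size s /\ ilab (nth (dstep A) s (phi v)).2 = Some (lab v)) &
      (forall i, i < size s -> ilab (nth (dstep A) s i).2 <> None ->
                 exists v, phi v = i)] /\
  [/\ exact_labels (labels a') (fun e => up e = None),
      exact_labels (labels b') (fun e => lo e = None) &
      forall v, let i' := (nth (dstep _) s' (phi v)).2 in
        exact_labels (labels (ipre i')) (fun e => lo e = Some v)
     /\ exact_labels (labels (icon i')) (fun e => up e = Some v)].

Section SE.

(* A = B minus iota, kappa, eps *)
Variables (B : flow) (iota kappa : fV B) (eps : fE B).

Definition del_flow : flow :=
  @Flow {v : fV B | (v != iota) && (v != kappa)} {e : fE B | e != eps}
    (fun v => lab (val v))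
    (fun e => obind (fun v => insub v) (up (val e)))
    (fun e => obind (fun v => insub v) (lo (val e))).

End SE.

Section Build.
Variables (A : flow) (e2 e3 : fE A).

Definition Uedge := {e : fE A | (up e == None) && (e != e2)}.
Definition Ledge := {e : fE A | (lo e == None) && (e != e3)}.

(* vertices: (tilde copy + hat copy) + ((weakening + coweakening) +
   (cocontractions indexed by U + contractions indexed by L)) *)
Definition VC : finType := ((fV A + fV A) + ((unit + unit) + (Uedge + Ledge)))%type.
(* edges: (tilde copy + hat copy without hat eps2, tilde eps3 being the
   merged edge) + (the eps_i + the eps'_j) *)
Definition EC : finType :=
  ((fE A + {e : fE A | e != e2}) + (Uedge + Ledge))%type.

Definition vt (v : fV A) : VC := inl (inl v).
Definition vh (v : fV A) : VC := inl (inr v).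
Definition vW : VC := inr (inl (inl tt)).
Definition vCW : VC := inr (inl (inr tt)).
Definition vCocon (u : Uedge) : VC := inr (inr (inl u)).
Definition vCon (l : Ledge) : VC := inr (inr (inr l)).

Definition labC (v : VC) : vlab :=
  match v with
  | inl (inl v) => lab v | inl (inr v) => lab v
  | inr (inl (inl _)) => VWk | inr (inl (inr _)) => VCowk
  | inr (inr (inl _)) => VCocon | inr (inr (inr _)) => VCon
  end.

Definition up_t (e : fE A) : option VC :=
  if e == e2 then Some vW
  else if up e is Some v then Some (vt v) else omap vCocon (insub e).
Definition up_h (e : fE A) : option VC :=
  if up e is Some v then Some (vh v) else omap vCocon (insub e).
Definition lo_h (e : fE A) : option VC :=
  if e == e3 then Some vCW
  else if lo e is Some v then Some (vh v) else omap vCon (insub e).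
Definition lo_t (e : fE A) : option VC :=
  if e == e3 then lo_h e2
  else if lo e is Some v then Some (vt v) else omap vCon (insub e).

Definition upC (e : EC) : option VC :=
  match e with
  | inl (inl e) => up_t e | inl (inr e) => up_h (val e)
  | inr (inl _) => None | inr (inr l) => Some (vCon l)
  end.
Definition loC (e : EC) : option VC :=
  match e with
  | inl (inl e) => lo_t e | inl (inr e) => lo_h (val e)
  | inr (inl u) => Some (vCocon u) | inr (inr _) => None
  end.

Definition se_build : flow := @Flow VC EC labC upC loC.

End Build.

Definition se_red (B C : flow) : Prop :=
  is_atomic_flow B /\
  exists (iota kappa : fV B) (eps : fE B)
         (e2 e3 : fE (del_flow iota kappa eps)),
    [/\ lab iota = VInt, lab kappa = VCut,
        up eps = Some iota & lo eps = Some kappa] /\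
    [/\ up (val e2) = Some iota, lo (val e3) = Some kappa &
        flow_iso (se_build e2 e3) C].

From mathcomp Require Import all_boot.
From Stdlib Require List.
Set Implicit Arguments. Unset Strict Implicit. Unset Printing Implicit Defensive.

(* Label the atom occurrences of the derivation by the edges of [B] and take two
   copies of it.  In the tilde copy the occurrences of the edge [eps] from the
   interaction to the cut become [t]: the interaction turns into a weakening of
   [e2], and the cut leaves behind the single atom [e3], which switches pull out
   to the top level.  In the hat copy they become [f]: the cut turns into a
   coweakening of [e3], and the interaction consumes an atom [e2], which switches
   push in from the top level.  Identifying the leftover tilde [e3] with the
   consumed hat [e2] as one atom [z], the two copies compose to
     a --> (~a /\ ^a) --> ([~b \/ z] /\ ^a) --> [~b \/ (z /\ ^a)] --> [~b \/ ^b] --> b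
   by cocontraction, the tilde copy, a switch, the hat copy and contraction.
   Following the labels through this derivation shows that its flow is the
   reduct [C]. *)

(** * Derivations recording their atomic steps *)

Section Derivations.
Variable X : Type.
Implicit Types (a b c m : fml X) (s t : seq (step X)) (l : seq (inst X))
  (d k : ctx X) (i : inst X).

Definition atomic i : bool := isSome (ilab i).

Definition atomic_trace s : seq (inst X) := [seq st.2 | st <- s & atomic st.2].

Lemma atomic_trace_cat s t : atomic_trace (s ++ t) = atomic_trace s ++ atomic_trace t.
Proof. by rewrite /atomic_trace filter_cat map_cat. Qed.

Lemma atomic_trace_cons k i s :
  atomic_trace ((k, i) :: s) = if atomic i then i :: atomic_trace s else atomic_trace s.
Proof. by rewrite /atomic_trace /=; case: (atomic i). Qed.

Fixpoint ctx_comp d k : ctx X :=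
  match d with
  | Hole => k
  | COrL d b => COrL (ctx_comp d k) b | COrR b d => COrR b (ctx_comp d k)
  | CAndL d b => CAndL (ctx_comp d k) b | CAndR b d => CAndR b (ctx_comp d k)
  end.

Lemma plug_comp d k a : plug (ctx_comp d k) a = plug d (plug k a).
Proof. by elim: d => //= [d -> b|b d ->|d -> b|b d ->]. Qed.

Definition step_in d (st : step X) : step X := (ctx_comp d st.1, st.2).

Lemma deriv_cat a s b t c : deriv a s b -> deriv b t c -> deriv a (s ++ t) c.
Proof. by elim=> //= k i s' b' _ IH H; apply: deriv_cons; apply: IH. Qed.

Lemma deriv_plug d a s b : deriv a s b -> deriv (plug d a) (map (step_in d) s) (plug d b).
Proof.
elim=> [a'|k i s' b' _ IH]; first exact: deriv_nil.
by rewrite /= -plug_comp; apply: deriv_cons; rewrite plug_comp.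
Qed.

Lemma deriv_fun a s b1 b2 : deriv a s b1 -> deriv a s b2 -> b1 = b2.
Proof.
move=> H; elim: H b2 => [a'|k i s' b' _ IH] b2 H2; inversion H2 => //.
exact: IH.
Qed.

Lemma deriv_consE k i s a b : deriv a ((k, i) :: s) b ->
  a = plug k (ipre i) /\ deriv (plug k (icon i)) s b.
Proof. by move=> H; inversion H. Qed.

Lemma deriv_catE a s t b : deriv a (s ++ t) b -> exists2 m, deriv a s m & deriv m t b.
Proof.
elim: s a => [|[k i] s IH] a /= H; first by exists a => //; apply: deriv_nil.
case/deriv_consE: H => -> /IH [m H1 H2].
by exists m => //; apply: deriv_cons.
Qed.

Definition derives a b l := exists s, deriv a s b /\ atomic_trace s = l.

Lemma derives_refl a : derives a a [::].
Proof. by exists [::]; split=> //; apply: deriv_nil. Qed.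

Lemma derives_trans a b c l1 l2 : derives a b l1 -> derives b c l2 -> derives a c (l1 ++ l2).
Proof.
move=> [s [Hs <-]] [t [Ht <-]]; exists (s ++ t).
by split; [apply: deriv_cat Hs Ht | rewrite atomic_trace_cat].
Qed.

Lemma derives_trans0 a b c l : derives a b [::] -> derives b c l -> derives a c l.
Proof. exact: derives_trans. Qed.

Lemma derives_plug d a b l : derives a b l -> derives (plug d a) (plug d b) l.
Proof.
move=> [s [Hs <-]]; exists (map (step_in d) s); split; first exact: deriv_plug.
by elim: s {Hs} => //= st s IH; rewrite /atomic_trace /=; case: (atomic st.2) => //=; congr cons.
Qed.

Lemma derives_inst i : derives (ipre i) (icon i) (if atomic i then [:: i] else [::]).
Proof.
exists [:: (Hole, i)]; split; last by rewrite atomic_trace_cons.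
by apply: (@deriv_cons X Hole); apply: deriv_nil.
Qed.

Lemma derives_orl a a' b l : derives a a' l -> derives (FOr a b) (FOr a' b) l.
Proof. exact: (derives_plug (COrL Hole b)). Qed.
Lemma derives_orr a a' b l : derives a a' l -> derives (FOr b a) (FOr b a') l.
Proof. exact: (derives_plug (COrR b Hole)). Qed.
Lemma derives_andl a a' b l : derives a a' l -> derives (FAnd a b) (FAnd a' b) l.
Proof. exact: (derives_plug (CAndL Hole b)). Qed.
Lemma derives_andr a a' b l : derives a a' l -> derives (FAnd b a) (FAnd b a') l.
Proof. exact: (derives_plug (CAndR b Hole)). Qed.

Lemma derives_orC a b : derives (FOr a b) (FOr b a) [::].
Proof. exact: (derives_inst (IEq ComOr true a b Ff)). Qed.
Lemma derives_andC a b : derives (FAnd a b) (FAnd b a) [::].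
Proof. exact: (derives_inst (IEq ComAnd true a b Ff)). Qed.
Lemma derives_orA a b c : derives (FOr a (FOr b c)) (FOr (FOr a b) c) [::].
Proof. exact: (derives_inst (IEq AssOr false a b c)). Qed.
Lemma derives_orAV a b c : derives (FOr (FOr a b) c) (FOr a (FOr b c)) [::].
Proof. exact: (derives_inst (IEq AssOr true a b c)). Qed.
Lemma derives_andA a b c : derives (FAnd a (FAnd b c)) (FAnd (FAnd a b) c) [::].
Proof. exact: (derives_inst (IEq AssAnd false a b c)). Qed.
Lemma derives_andAV a b c : derives (FAnd (FAnd a b) c) (FAnd a (FAnd b c)) [::].
Proof. exact: (derives_inst (IEq AssAnd true a b c)). Qed.
Lemma derives_orf a : derives (FOr a Ff) a [::].
Proof. exact: (derives_inst (IEq UnitOr true a Ff Ff)). Qed.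
Lemma derives_orfV a : derives a (FOr a Ff) [::].
Proof. exact: (derives_inst (IEq UnitOr false a Ff Ff)). Qed.
Lemma derives_andt a : derives (FAnd a Ft) a [::].
Proof. exact: (derives_inst (IEq UnitAnd true a Ff Ff)). Qed.
Lemma derives_andtV a : derives a (FAnd a Ft) [::].
Proof. exact: (derives_inst (IEq UnitAnd false a Ff Ff)). Qed.
Lemma derives_tort : derives (FOr Ft Ft) Ft [::].
Proof. exact: (derives_inst (IEq TOrT true Ff Ff Ff)). Qed.
Lemma derives_fandfV : derives Ff (FAnd Ff Ff) [::].
Proof. exact: (derives_inst (IEq FAndF false Ff Ff Ff)). Qed.
Lemma derives_switch a b c : derives (FAnd a (FOr b c)) (FOr (FAnd a b) c) [::].
Proof. exact: (derives_inst (ISw a b c)). Qed.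
Lemma derives_medial a b c m :
  derives (FOr (FAnd a b) (FAnd c m)) (FAnd (FOr a c) (FOr b m)) [::].
Proof. exact: (derives_inst (IMed a b c m)). Qed.
Lemma derives_wk x : derives Ff (Atm x) [:: IWk x].
Proof. exact: (derives_inst (IWk x)). Qed.
Lemma derives_cowk x : derives (Atm x) Ft [:: ICowk x].
Proof. exact: (derives_inst (ICowk x)). Qed.
Lemma derives_con x y z : derives (FOr (Atm x) (Atm y)) (Atm z) [:: ICon x y z].
Proof. exact: (derives_inst (ICon x y z)). Qed.
Lemma derives_cocon x y z : derives (Atm x) (FAnd (Atm y) (Atm z)) [:: ICocon x y z].
Proof. exact: (derives_inst (ICocon x y z)). Qed.

Lemma derives_orCA a b c m :
  derives (FOr (FOr a b) (FOr c m)) (FOr (FOr a c) (FOr b m)) [::].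
Proof.
apply: derives_trans0 (derives_orAV _ _ _) _; apply: derives_trans0 _ (derives_orA _ _ _).
apply: derives_orr; apply: derives_trans0 (derives_orA _ _ _) _.
exact: derives_trans0 (derives_orl _ (derives_orC _ _)) (derives_orAV _ _ _).
Qed.

Lemma derives_andCA a b c m :
  derives (FAnd (FAnd a b) (FAnd c m)) (FAnd (FAnd a c) (FAnd b m)) [::].
Proof.
apply: derives_trans0 (derives_andAV _ _ _) _; apply: derives_trans0 _ (derives_andA _ _ _).
apply: derives_andr; apply: derives_trans0 (derives_andA _ _ _) _.
exact: derives_trans0 (derives_andl _ (derives_andC _ _)) (derives_andAV _ _ _).
Qed.

Lemma derives_pull_out k (z : fml X) : derives (plug k z) (FOr (plug k Ff) z) [::].
Proof.
elim: k => /= [|k IH b|b k IH|k IH b|b k IH].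
- exact: derives_trans0 (derives_orfV _) (derives_orC _ _).
- apply: derives_trans0 (derives_orl _ IH) _; apply: derives_trans0 (derives_orAV _ _ _) _.
  exact: derives_trans0 (derives_orr _ (derives_orC _ _)) (derives_orA _ _ _).
- exact: derives_trans0 (derives_orr _ IH) (derives_orA _ _ _).
- apply: derives_trans0 (derives_andl _ IH) _; apply: derives_trans0 (derives_andC _ _) _.
  exact: derives_trans0 (derives_switch _ _ _) (derives_orl _ (derives_andC _ _)).
- exact: derives_trans0 (derives_andr _ IH) (derives_switch _ _ _).
Qed.

Lemma derives_push_in k (z : fml X) a : derives (FAnd z (plug k a)) (plug k (FAnd z a)) [::].
Proof.
elim: k => /= [|k IH b|b k IH|k IH b|b k IH].
- exact: derives_refl.
- exact: derives_trans0 (derives_switch _ _ _) (derives_orl _ IH).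
- apply: derives_trans0 (derives_andr _ (derives_orC _ _)) _.
  apply: derives_trans0 (derives_switch _ _ _) _.
  exact: derives_trans0 (derives_orl _ IH) (derives_orC _ _).
- exact: derives_trans0 (derives_andA _ _ _) (derives_andl _ IH).
- apply: derives_trans0 (derives_andA _ _ _) _.
  apply: derives_trans0 (derives_andl _ (derives_andC _ _)) _.
  exact: derives_trans0 (derives_andAV _ _ _) (derives_andr _ IH).
Qed.

End Derivations.

Section Renaming.
Variables (X Y : Type) (f : X -> Y).

Lemma fatoms_fmap a : fatoms (fmap f a) = map f (fatoms a).
Proof. by elim: a => //= a -> b ->; rewrite map_cat. Qed.

Lemma fmap_plug k a : fmap f (plug k a) = plug (cmap f k) (fmap f a).
Proof. by elim: k => //= [k -> b|b k ->|k -> b|b k ->]. Qed.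

Lemma fmap_ipre i : fmap f (ipre i) = ipre (imap f i).
Proof. by case: i => //= q [] a b c; case: q. Qed.

Lemma fmap_icon i : fmap f (icon i) = icon (imap f i).
Proof. by case: i => //= q [] a b c; case: q. Qed.

Lemma deriv_fmap a s b : deriv a s b -> deriv (fmap f a) (map (smap f) s) (fmap f b).
Proof.
elim=> [a'|k i s' b' _ IH] /=; first exact: deriv_nil.
by rewrite fmap_plug fmap_ipre; apply: deriv_cons; rewrite -fmap_icon -fmap_plug.
Qed.

Lemma ilab_imap i : ilab (imap f i) = ilab i.
Proof. by case: i. Qed.

Lemma atomic_imap i : atomic (imap f i) = atomic i.
Proof. by rewrite /atomic ilab_imap. Qed.

Lemma atomic_trace_map s : atomic_trace (map (smap f) s) = map (imap f) (atomic_trace s).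
Proof.
elim: s => //= -[k i] s IH.
by rewrite !atomic_trace_cons /= atomic_imap; case: (atomic i) => //=; rewrite IH.
Qed.

Lemma eq_fmap (g : X -> Y) a : f =1 g -> fmap f a = fmap g a.
Proof. by move=> fg; elim: a => //= [x|a -> b ->|a -> b ->]; rewrite ?fg. Qed.

Lemma eq_imap (g : X -> Y) i : f =1 g -> imap f i = imap g i.
Proof. by move=> fg; case: i => /= *; rewrite ?fg ?(eq_fmap _ fg). Qed.

End Renaming.

Section Composition.
Variables (X Y Z : Type) (f : Y -> Z) (g : X -> Y).

Lemma fmap_comp a : fmap f (fmap g a) = fmap (f \o g) a.
Proof. by elim: a => //= a -> b ->. Qed.

Lemma cmap_comp k : cmap f (cmap g k) = cmap (f \o g) k.
Proof. by elim: k => //= [k -> b|b k ->|k -> b|b k ->]; rewrite fmap_comp. Qed.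

Lemma imap_comp i : imap f (imap g i) = imap (f \o g) i.
Proof. by case: i => //= *; rewrite !fmap_comp. Qed.

End Composition.

Section CopyFormula.
Variables (X Y : Type) (f g h : X -> Y).

Lemma derives_cocontract a :
  derives (fmap f a) (FAnd (fmap g a) (fmap h a))
    [seq ICocon (f x) (g x) (h x) | x <- fatoms a].
Proof.
elim: a => /= [||x|a IHa b IHb|a IHa b IHb].
- exact: derives_fandfV.
- exact: derives_andtV.
- exact: derives_cocon.
- rewrite map_cat -[_ ++ _]cats0 -catA.
  apply: derives_trans (derives_orl _ IHa) _.
  exact: derives_trans (derives_orr _ IHb) (derives_medial _ _ _ _).
- rewrite map_cat -[_ ++ _]cats0 -catA.
  apply: derives_trans (derives_andl _ IHa) _.
  exact: derives_trans (derives_andr _ IHb) (derives_andCA _ _ _ _).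
Qed.

Lemma derives_contract a :
  derives (FOr (fmap g a) (fmap h a)) (fmap f a)
    [seq ICon (g x) (h x) (f x) | x <- fatoms a].
Proof.
elim: a => /= [||x|a IHa b IHb|a IHa b IHb].
- exact: derives_orf.
- exact: derives_tort.
- exact: derives_con.
- rewrite map_cat.
  apply: derives_trans0 (derives_orCA _ _ _ _) _.
  exact: derives_trans (derives_orl _ IHa) (derives_orr _ IHb).
- rewrite map_cat.
  apply: derives_trans0 (derives_medial _ _ _ _) _.
  exact: derives_trans (derives_andl _ IHa) (derives_andr _ IHb).
Qed.

End CopyFormula.

Section Substitution.
Variables (X Y : Type) (sg : X -> fml Y) (r : X -> Y).

Fixpoint fsubst (a : fml X) : fml Y :=
  match a with
  | Ff => Ff | Ft => Ft | Atm x => sg x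
  | FOr a b => FOr (fsubst a) (fsubst b) | FAnd a b => FAnd (fsubst a) (fsubst b)
  end.

Fixpoint csubst (k : ctx X) : ctx Y :=
  match k with
  | Hole => Hole
  | COrL k b => COrL (csubst k) (fsubst b) | COrR b k => COrR (fsubst b) (csubst k)
  | CAndL k b => CAndL (csubst k) (fsubst b) | CAndR b k => CAndR (fsubst b) (csubst k)
  end.

Lemma fsubst_plug k a : fsubst (plug k a) = plug (csubst k) (fsubst a).
Proof. by elim: k => //= [k -> b|b k ->|k -> b|b k ->]. Qed.

Definition renames_on (xs : seq X) := forall x, List.In x xs -> sg x = Atm (r x).

Lemma fsubst_fmap a : renames_on (fatoms a) -> fsubst a = fmap r a.
Proof.
elim: a => //= [x|a IHa b IHb|a IHa b IHb] ren; first by apply: ren; left.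
- by rewrite IHa ?IHb // => x Hx; apply: ren; apply: List.in_or_app; tauto.
- by rewrite IHa ?IHb // => x Hx; apply: ren; apply: List.in_or_app; tauto.
Qed.

Definition renames_inst (i : inst X) := renames_on (fatoms (ipre i) ++ fatoms (icon i)).

Lemma derives_fsubst_atomic i : atomic i -> renames_inst i ->
  derives (fsubst (ipre i)) (fsubst (icon i)) [:: imap r i].
Proof.
case: i => //= [x y|x|x y z|x y|x|x y z] _ ren; rewrite !ren /=; try tauto.
- exact: derives_inst (IInt (r x) (r y)).
- exact: derives_wk.
- exact: derives_con.
- exact: derives_inst (ICut (r x) (r y)).
- exact: derives_cowk.
- exact: derives_cocon.
Qed.

Lemma derives_fsubst_nonatomic i : ~~ atomic i ->
  derives (fsubst (ipre i)) (fsubst (icon i)) [::].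
Proof.
case: i => //= [a b c|a b c m|q d a b c] _.
- exact: derives_switch.
- exact: derives_medial.
- have := derives_inst (IEq q d (fsubst a) (fsubst b) (fsubst c)).
  by case: d; case: q.
Qed.

Lemma derives_fsubst a s b : deriv a s b ->
  (forall i, List.In i (atomic_trace s) -> renames_inst i) ->
  derives (fsubst a) (fsubst b) (map (imap r) (atomic_trace s)).
Proof.
elim=> [a'|k i s' b' _ IH] ren; first exact: derives_refl.
rewrite !fsubst_plug atomic_trace_cons.
move: ren; rewrite atomic_trace_cons; case: ifP => Hi ren /=.
- apply: (derives_trans (l1 := [:: imap r i]) (b := plug (csubst k) (fsubst (icon i)))).
    by apply: derives_plug; apply: derives_fsubst_atomic => //; apply: ren; left.
  by rewrite -fsubst_plug; apply: IH => j Hj; apply: ren; right.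
- apply: (derives_trans0 (b := plug (csubst k) (fsubst (icon i)))).
    by apply: derives_plug; apply: derives_fsubst_nonatomic; rewrite Hi.
  by rewrite -fsubst_plug; apply: IH.
Qed.

End Substitution.

Lemma In_fatoms_plug X (k : ctx X) a x :
  List.In x (fatoms (plug k a)) <-> List.In x (fatoms (plug k Ff)) \/ List.In x (fatoms a).
Proof.
by elim: k => /= [|k IH b|b k IH|k IH b|b k IH]; rewrite ?List.in_app_iff ?IH; tauto.
Qed.

Lemma In_fatoms_nonatomic X (i : inst X) x : ~~ atomic i ->
  List.In x (fatoms (icon i)) <-> List.In x (fatoms (ipre i)).
Proof.
case: i => //= [a b c|a b c m|q [] a b c] _; rewrite ?List.in_app_iff; try tauto;
  by case: q => /=; rewrite ?List.in_app_iff /=; tauto.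
Qed.

Lemma deriv_atom_source X (a : fml X) s b x : deriv a s b -> List.In x (fatoms b) ->
  List.In x (fatoms a) \/
  exists s1 k i s2, [/\ s = s1 ++ (k, i) :: s2, atomic i & List.In x (fatoms (icon i))].
Proof.
elim=> [a'|k i s' b' _ IH] Hx; first by left.
case: (IH Hx) => [|[s1 [k' [j [s2 [-> Hj Hxj]]]]]]; last first.
  by right; exists ((k, i) :: s1), k', j, s2.
case/In_fatoms_plug => H.
- by left; apply/In_fatoms_plug; left.
- case Hi: (atomic i); first by right; exists [::], k, i, s'.
  by left; apply/In_fatoms_plug; right; apply/(In_fatoms_nonatomic _ (negbT Hi)).
Qed.

Lemma In_atomic_trace X (s : seq (step X)) i :
  List.In i (atomic_trace s) <-> exists k, List.In (k, i) s /\ atomic i.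
Proof.
rewrite /atomic_trace List.in_map_iff; split.
- by case=> -[k j] [/= <- /List.filter_In [Hs Hj]]; exists k.
- by case=> k [Hs Hi]; exists (k, i); split=> //; apply/List.filter_In.
Qed.

(** * Atomic flows of annotated derivations *)

Lemma In_nth T (x0 x : T) s : List.In x s -> exists2 k, k < size s & nth x0 s k = x.
Proof.
elim: s => //= y s IH [->|/IH [k Hk <-]]; first by exists 0.
by exists k.+1.
Qed.

Lemma nth_In T (x0 : T) s k : k < size s -> List.In (nth x0 s k) s.
Proof. by elim: s k => //= y s IH [|k] /= Hk; [left|right; apply: IH]. Qed.

Lemma find_count_eq1 T (P : pred T) x0 s k :
  k < size s -> P (nth x0 s k) -> count P s = 1 -> find P s = k.
Proof.
elim: s k => //= y s IH [|k] /= Hk HP; first by rewrite HP.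
case Py: (P y) => /=; last by rewrite add0n => /(IH k) ->.
rewrite add1n => -[/eqP]; rewrite -leqn0 leqNgt -has_count => /negP; case.
by apply/(has_nthP x0); exists k.
Qed.

Lemma count_eq1_nth T (P : pred T) x0 s j :
  j < size s -> (forall k, k < size s -> P (nth x0 s k) = (k == j)) -> count P s = 1.
Proof.
elim: s j => //= y s IH [|j] /= Hj HP; rewrite (HP 0 erefl) /=.
- rewrite add1n; congr S; apply/eqP; rewrite -leqn0 leqNgt -has_count.
  by apply/(has_nthP x0) => -[k Hk]; rewrite (HP k.+1 Hk).
- by rewrite (IH j) // => k Hk; rewrite (HP k.+1).
Qed.

Lemma count_In_eq0 T (P : pred T) s x : count P s = 0 -> List.In x s -> ~~ P x.
Proof.
elim: s => //= y s IH; case Py: (P y) => //= H [<-|]; first by rewrite Py.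
exact: IH.
Qed.

Lemma count_In_gt0 T (P : pred T) s : 0 < count P s -> exists x, List.In x s /\ P x.
Proof.
elim: s => //= y s IH; case Py: (P y) => /= H; first by exists y; split=> //; left.
by have [x [Hx Px]] := IH H; exists x; split=> //; right.
Qed.

Lemma eq_In_count T (P Q : pred T) s :
  (forall x, List.In x s -> P x = Q x) -> count P s = count Q s.
Proof. by elim: s => //= y s IH H; rewrite H ?IH //; [move=> x Hx; apply: H; right|left]. Qed.

Lemma In_atomic_trace_nth X (s : seq (step X)) k : k < size s ->
  atomic (nth (dstep X) s k).2 -> List.In (nth (dstep X) s k).2 (atomic_trace s).
Proof.
move=> Hk Hat; apply/In_atomic_trace; exists (nth (dstep X) s k).1.
by rewrite -surjective_pairing; split=> //; apply: nth_In.
Qed.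

Lemma In_labels A (E : eqType) (x : A * E) a : List.In x (fatoms a) -> x.2 \in labels a.
Proof.
rewrite /labels; elim: (fatoms a) => //= y l IH [->|/IH]; first by rewrite inE eqxx.
by rewrite inE => ->; rewrite orbT.
Qed.

Section ExactLabels.
Variables (E E' : eqType).

Lemma exact_labels0 (Q : E -> Prop) : (forall e, ~ Q e) -> exact_labels [::] Q.
Proof. by move=> H; split=> // e; split=> // /H. Qed.

Lemma exact_labels1 (x : E) (Q : E -> Prop) :
  (forall e, Q e <-> e = x) -> exact_labels [:: x] Q.
Proof. by move=> H; split=> // e; rewrite H inE; split=> [/eqP|->]. Qed.

Lemma exact_labels2 (x y : E) (Q : E -> Prop) : x != y ->
  (forall e, Q e <-> e = x \/ e = y) -> exact_labels [:: x; y] Q.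
Proof.
move=> xy H; split; first by rewrite /= inE xy.
by move=> e; rewrite H !inE; split=> [/orP [] /eqP|[] ->]; rewrite ?eqxx ?orbT; auto.
Qed.

Lemma exact_labels2E (x y : E) (Q : E -> Prop) e :
  exact_labels [:: x; y] Q -> Q e -> e = x \/ e = y.
Proof. by case=> _ /(_ e) <-; rewrite !inE => /orP [] /eqP; auto. Qed.

Lemma exact_labels2_cases (x y : E) (Q : E -> Prop) e1 e2 :
  exact_labels [:: x; y] Q -> Q e1 -> Q e2 -> e1 != e2 ->
  (x = e1 /\ y = e2) \/ (x = e2 /\ y = e1).
Proof.
move=> H /(exact_labels2E H) [] -> /(exact_labels2E H) [] ->; rewrite ?eqxx //; auto.
Qed.

Lemma exact_labels_map (g : E -> E') l (P : E -> Prop) (Q : E' -> Prop) :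
  exact_labels l P -> (forall e1 e2, P e1 -> P e2 -> g e1 = g e2 -> e1 = e2) ->
  (forall e', Q e' <-> exists e, P e /\ g e = e') -> exact_labels (map g l) Q.
Proof.
move=> [Hu Hm] ginj HQ; split.
- by rewrite map_inj_in_uniq // => x y /Hm Hx /Hm Hy; apply: ginj.
- move=> e'; rewrite HQ; split; first by case/mapP => e /Hm He ->; exists e.
  by case=> e [/Hm He <-]; apply: map_f.
Qed.

End ExactLabels.

Definition relabel A (E E' : Type) (g : E -> E') (x : A * E) : A * E' := (x.1, g x.2).

Section Relabel.
Variables (A : Type) (E E' : eqType) (g : E -> E').

Lemma labels_relabel (a : fml (A * E)) : labels (fmap (relabel g) a) = map g (labels a).
Proof. by rewrite /labels fatoms_fmap -!map_comp. Qed.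

Lemma labels_ipre_relabel (i : inst (A * E)) :
  labels (ipre (imap (relabel g) i)) = map g (labels (ipre i)).
Proof. by rewrite -fmap_ipre labels_relabel. Qed.

Lemma labels_icon_relabel (i : inst (A * E)) :
  labels (icon (imap (relabel g) i)) = map g (labels (icon i)).
Proof. by rewrite -fmap_icon labels_relabel. Qed.

End Relabel.

Section ErasedSteps.
Variables (A X : Type).

Lemma nth_smap_fst (s : seq (step (A * X))) k : k < size s ->
  (nth (dstep A) (map (smap fst) s) k).2 = imap fst (nth (dstep (A * X)) s k).2.
Proof. by move=> Hk; rewrite (nth_map (dstep (A * X))). Qed.

Lemma fmap_fst_relabel E (g : X -> E) (a : fml (A * X)) :
  fmap fst (fmap (relabel g) a) = fmap fst a.
Proof. by rewrite fmap_comp; apply: eq_fmap. Qed.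

Variable bar : A -> A.

Lemma inst_ok_nth_smap_fst (s : seq (step (A * X))) :
  List.Forall (fun st => inst_ok bar (imap fst st.2)) s ->
  forall k, k < size (map (smap fst) s) -> inst_ok bar (nth (dstep A) (map (smap fst) s) k).2.
Proof.
move=> /List.Forall_forall ok k; rewrite size_map => Hk.
by rewrite nth_smap_fst //; apply: ok; apply: nth_In.
Qed.

Lemma inst_ok_atomic_trace (s : seq (step (A * X))) :
  (forall k, k < size (map (smap fst) s) -> inst_ok bar (nth (dstep A) (map (smap fst) s) k).2) ->
  List.Forall (fun i => inst_ok bar (imap fst i)) (atomic_trace s).
Proof.
move=> ok; apply/List.Forall_forall => i /In_atomic_trace [k [Hk _]].
have [j Hj Ej] := In_nth (dstep _) Hk.
by have := ok j; rewrite size_map nth_smap_fst // Ej; apply.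
Qed.

End ErasedSteps.

Section Witness.
Variables (A : Type) (F : flow).
Local Notation XF := (A * fE F)%type.
Implicit Types (s : seq (step XF)) (i : inst XF) (v : fV F).

Definition realizes i v :=
  [/\ ilab i = Some (lab v),
      exact_labels (labels (ipre i)) (fun e => lo e = Some v) &
      exact_labels (labels (icon i)) (fun e => up e = Some v)].

Definition inst_vertex i : option (fV F) :=
  if atomic i then
    match labels (icon i), labels (ipre i) with
    | e :: _, _ => up e
    | [::], e :: _ => lo e
    | [::], [::] => None
    end
  else None.

Lemma realizes_vertex i v : realizes i v -> inst_vertex i = Some v.
Proof.
case=> Hl [_ Hp] [_ Hc]; rewrite /inst_vertex /atomic Hl /=.
by case: i Hl Hp Hc => //= [x y|x|x y z|x y|x|x y z] _ Hp Hc;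
  [apply/Hc|apply/Hc|apply/Hc|apply/Hp|apply/Hp|apply/Hc]; rewrite inE eqxx.
Qed.

Lemma count_atomic_trace (P : pred (option (fV F))) s : P None = false ->
  count (fun st => P (inst_vertex st.2)) s = count (fun i => P (inst_vertex i)) (atomic_trace s).
Proof.
move=> PN; elim: s => //= -[k i] s IH; rewrite atomic_trace_cons /=.
by case Hi: (atomic i) => /=; rewrite IH // /inst_vertex Hi PN.
Qed.

Definition realizable (l : seq (inst XF)) := List.Forall (fun i => exists v, realizes i v) l.

Definition flow_witness (a' : fml XF) s (b' : fml XF) :=
  [/\ deriv a' s b',
      exact_labels (labels a') (fun e => up e = None),
      exact_labels (labels b') (fun e => lo e = None),
      realizable (atomic_trace s) &
      (forall v, count (fun i => inst_vertex i == Some v) (atomic_trace s) = 1)].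

Lemma flow_of_witness a' s b' :
  flow_witness a' s b' -> flow_of (fmap fst a') (map (smap fst) s) F.
Proof.
case=> Hd Ha Hb Hr Hc; have {}Hr := proj1 (List.Forall_forall _ _) Hr.
pose P v := fun st : step XF => inst_vertex st.2 == Some v.
have HcP v : count (P v) s = 1.
  by rewrite (count_atomic_trace (P := fun o => o == Some v)).
have Hhas v : has (P v) s by rewrite has_count HcP.
have HrP v k : k < size s -> P v (nth (dstep _) s k) -> realizes (nth (dstep _) s k).2 v.
  move=> Hk /eqP Hv.
  have Hat : atomic (nth (dstep _) s k).2 by move: Hv; rewrite /inst_vertex; case: atomic.
  have [w Hw] := Hr _ (In_atomic_trace_nth Hk Hat).
  by move: (realizes_vertex Hw); rewrite Hv => -[->].
have Hfind v : realizes (nth (dstep _) s (find (P v) s)).2 v.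
  by apply: HrP; [rewrite -has_find|apply: nth_find].
exists a', s, b', (fun v => find (P v) s).
split; first by [].
split; split.
- move=> v w E; move: (nth_find (dstep _) (Hhas v)) (nth_find (dstep _) (Hhas w)).
  by rewrite /P E => /eqP -> /eqP [].
- move=> v; rewrite size_map -has_find nth_smap_fst ?ilab_imap -?has_find //.
  by case: (Hfind v).
- move=> k; rewrite size_map => Hk; rewrite nth_smap_fst // ilab_imap => Hl.
  have Hat : atomic (nth (dstep _) s k).2 by rewrite /atomic; case: ilab Hl.
  have [w Hw] := Hr _ (In_atomic_trace_nth Hk Hat).
  by exists w; apply: (find_count_eq1 (x0 := dstep _)); rewrite // /P (realizes_vertex Hw).
- by [].
- by [].
- by move=> v; case: (Hfind v).
Qed.

Lemma witness_of_flow (a : fml A) (s : seq (step A)) : flow_of a s F ->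
  exists a' s' b', [/\ fmap fst a' = a, map (smap fst) s' = s & flow_witness a' s' b'].
Proof.
move=> [a' [s' [b' [phi [[<- <- Hd] [[phi_inj Hphi Hcov] [Hpre Hcon Hv]]]]]]].
exists a', s', b'; split=> //.
have Hr v : realizes (nth (dstep _) s' (phi v)).2 v.
  have [Hk Hl] := Hphi v; have [H3 H4] := Hv v; rewrite size_map in Hk.
  by split=> //; rewrite -(ilab_imap fst) -nth_smap_fst.
have Hat k : k < size s' -> atomic (nth (dstep _) s' k).2 ->
    exists2 v, phi v = k & realizes (nth (dstep _) s' k).2 v.
  move=> Hk Hak; have Hl : ilab (nth (dstep A) (map (smap fst) s') k).2 <> None.
    by rewrite nth_smap_fst // ilab_imap; move: Hak; rewrite /atomic; case: ilab.
  have Hk' : k < size (map (smap fst) s') by rewrite size_map.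
  by have [v Ev] := Hcov k Hk' Hl; exists v; rewrite -?Ev.
split=> //.
- apply/List.Forall_forall => i /In_atomic_trace [k [/(In_nth (dstep _)) [j Hj Ej] Hi]].
  by have [|v _] := Hat j Hj; rewrite Ej //; exists v.
- move=> v; rewrite -(count_atomic_trace (P := fun o => o == Some v)) //.
  have Hp : phi v < size s' by have [] := Hphi v; rewrite size_map.
  apply: (count_eq1_nth (x0 := dstep _) Hp) => k Hk; apply/idP/idP.
  + move=> /eqP Ho.
    have Hak : atomic (nth (dstep _) s' k).2 by move: Ho; rewrite /inst_vertex; case: atomic.
    have [w Ew Hw] := Hat k Hk Hak.
    by move: (realizes_vertex Hw); rewrite Ho => -[->]; rewrite Ew.
  + by move=> /eqP ->; rewrite (realizes_vertex (Hr v)).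
Qed.

End Witness.

Lemma realizes_relabel_edges A (F G : flow) (g : fE F -> fE G) (i : inst (A * fE F)) v w :
  lab w = lab v ->
  (forall e1 e2, lo e1 = Some v -> lo e2 = Some v -> g e1 = g e2 -> e1 = e2) ->
  (forall e1 e2, up e1 = Some v -> up e2 = Some v -> g e1 = g e2 -> e1 = e2) ->
  (forall e', lo e' = Some w <-> exists e, lo e = Some v /\ g e = e') ->
  (forall e', up e' = Some w <-> exists e, up e = Some v /\ g e = e') ->
  realizes i v -> realizes (imap (relabel g) i) w.
Proof.
move=> lab_w lo_inj up_inj lo_w up_w [Hl Hp Hc]; split; first by rewrite ilab_imap Hl lab_w.
- by rewrite labels_ipre_relabel; apply: exact_labels_map Hp lo_inj lo_w.
- by rewrite labels_icon_relabel; apply: exact_labels_map Hc up_inj up_w.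
Qed.

Section Isomorphism.
Variables (A : Type) (F G : flow) (f : fV F -> fV G) (g : fE F -> fE G).
Hypotheses (f_bij : bijective f) (g_bij : bijective g) (lab_f : forall v, lab (f v) = lab v)
  (up_g : forall e, up (g e) = omap f (up e)) (lo_g : forall e, lo (g e) = omap f (lo e)).

Local Notation relabel := (@relabel A _ _ g).

Lemma exact_labels_relabel a (P : fE F -> Prop) (Q : fE G -> Prop) :
  (forall e, Q (g e) <-> P e) -> exact_labels (labels a) P ->
  exact_labels (labels (fmap relabel a)) Q.
Proof.
move=> HQ Ha; rewrite labels_relabel; apply: exact_labels_map Ha _ _.
  by move=> e1 e2 _ _; apply: bij_inj.
have [g' gK g'K] := g_bij.
by move=> e'; rewrite -[e']g'K HQ; split=> [He|[e [He /(can_inj gK) <-]]]; first by exists (g' e').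
Qed.

Lemma omap_f_eq (o o' : option (fV F)) : omap f o = omap f o' <-> o = o'.
Proof. by split=> [/(inj_omap (bij_inj f_bij))|->]. Qed.

Lemma realizes_relabel i v : realizes i v -> realizes (imap relabel i) (f v).
Proof.
case=> Hl Hp Hc; split; first by rewrite ilab_imap Hl lab_f.
- by rewrite -fmap_ipre; apply: exact_labels_relabel Hp => e; rewrite lo_g (omap_f_eq _ (Some v)).
- by rewrite -fmap_icon; apply: exact_labels_relabel Hc => e; rewrite up_g (omap_f_eq _ (Some v)).
Qed.

Lemma inst_vertex_relabel i : inst_vertex (imap relabel i) = omap f (inst_vertex i).
Proof.
rewrite /inst_vertex atomic_imap; case: (atomic i) => //.
rewrite -fmap_icon -fmap_ipre !labels_relabel.
by case: (labels (icon i)) => [|e l] /=; [case: (labels (ipre i)) => [|e' l'] /=|].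
Qed.

Lemma flow_witness_relabel a' s b' : flow_witness a' s b' ->
  flow_witness (fmap relabel a') (map (smap relabel) s) (fmap relabel b').
Proof.
case=> Hd Ha Hb Hr Hc; split.
- exact: deriv_fmap.
- by apply: exact_labels_relabel Ha => e; rewrite up_g (omap_f_eq _ None).
- by apply: exact_labels_relabel Hb => e; rewrite lo_g (omap_f_eq _ None).
- rewrite /realizable atomic_trace_map List.Forall_map.
  by apply: List.Forall_impl Hr => i [v Hv]; exists (f v); apply: realizes_relabel.
- move=> w; have [f' fK f'K] := f_bij.
  rewrite atomic_trace_map count_map -(Hc (f' w)); apply: eq_count => i /=.
  rewrite inst_vertex_relabel -{1}[w]f'K.
by rewrite -[Some (f _)]/(omap f (Some _)) (inj_eq (inj_omap (bij_inj f_bij))).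
Qed.

End Isomorphism.

Lemma flow_of_iso A (a : fml A) s (F G : flow) : flow_iso F G -> flow_of a s F -> flow_of a s G.
Proof.
move=> [f [g [f_bij g_bij lab_f up_g lo_g]]] /witness_of_flow [a' [s' [b' [<- <- Hw]]]].
have := flow_of_witness (flow_witness_relabel f_bij g_bij lab_f up_g lo_g Hw).
rewrite fmap_comp -map_comp; congr flow_of; apply: eq_map => -[k i].
by rewrite /smap /= cmap_comp imap_comp.
Qed.

(** * The derivation for the reduct *)

Definition int_redex A E (bar : A -> A) (eps : E) (i : inst (A * E)) x (e2 : E) :=
  i = IInt (x, eps) (bar x, e2) \/ i = IInt (bar x, e2) (x, eps).

Definition cut_redex A E (bar : A -> A) (eps : E) (i : inst (A * E)) x (e3 : E) :=
  i = ICut (x, eps) (bar x, e3) \/ i = ICut (bar x, e3) (x, eps).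

Section SEFlow.
Variables (B : flow) (iota kappa : fV B) (eps : fE B).
Hypotheses (up_eps : up eps = Some iota) (lo_eps : lo eps = Some kappa).
Local Notation D := (del_flow iota kappa eps).
Variables (e2 e3 : fE D).
Hypotheses (up_e2 : up (val e2) = Some iota) (lo_e3 : lo (val e3) = Some kappa)
  (up_iota : forall e, up e = Some iota -> e = eps \/ e = val e2)
  (lo_kappa : forall e, lo e = Some kappa -> e = eps \/ e = val e3)
  (up_kappaN : forall e, up e <> Some kappa) (lo_iotaN : forall e, lo e <> Some iota).
Local Notation C := (se_build e2 e3).

Lemma e2_neq_eps : val e2 != eps. Proof. exact: valP e2. Qed.
Lemma e3_neq_eps : val e3 != eps. Proof. exact: valP e3. Qed.

Lemma insub_vD_Some (u : fV B) (v' : fV D) : (insub u = Some v') <-> u = val v'.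
Proof.
split; first by case: insubP => // w _ <- [->].
by move=> ->; rewrite valK.
Qed.

Lemma loD_Some (d : fE D) v' : lo d = Some v' <-> lo (val d) = Some (val v').
Proof.
by rewrite [lo d]/=; case: (lo (val d)) => [u|] //=; rewrite insub_vD_Some; split=> [->|[]].
Qed.

Lemma upD_Some (d : fE D) v' : up d = Some v' <-> up (val d) = Some (val v').
Proof.
by rewrite [up d]/=; case: (up (val d)) => [u|] //=; rewrite insub_vD_Some; split=> [->|[]].
Qed.

Lemma insub_vD_None (u : fV B) : (insub u : option (fV D)) = None <-> (u = iota \/ u = kappa).
Proof.
case: insubP => [w Hw <-|]; last first.
  by rewrite negb_and !negbK => /orP [] /eqP ->; split => //; tauto.
split => //; move: (valP w) => /andP [/eqP H1 /eqP H2] [] //.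
Qed.

Lemma loD_None (d : fE D) : lo d = None <-> (lo (val d) = None \/ d = e3).
Proof.
rewrite [lo d]/=; case E: (lo (val d)) => [u|] /=; last by split => //; left.
rewrite insub_vD_None; split.
- case=> Hu; first by subst; case: (lo_iotaN E).
  subst; case: (lo_kappa E) => H; first by move: (valP d); rewrite H eqxx.
  by right; apply: val_inj.
- case=> [H|Hd]; first by exfalso; move: H E; case: (lo _) => //; congruence.
  by right; move: E; rewrite Hd lo_e3; case.
Qed.

Lemma upD_None (d : fE D) : up d = None <-> (up (val d) = None \/ d = e2).
Proof.
rewrite [up d]/=; case E: (up (val d)) => [u|] /=; last by split => //; left.
rewrite insub_vD_None; split.
- case=> Hu; last by subst; case: (up_kappaN E).
  subst; case: (up_iota E) => H; first by move: (valP d); rewrite H eqxx.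
  by right; apply: val_inj.
- case=> [H|Hd]; first by exfalso; move: H E; case: (up _) => //; congruence.
  by left; move: E; rewrite Hd up_e2; case.
Qed.

(* [eps] is not an edge of [D]; it is sent to the junk value [e2]. *)
Definition del_edge (e : fE B) : fE D := insubd e2 e.
Lemma del_edgeK (e : fE B) : e != eps -> val (del_edge e) = e.
Proof. by move=> H; rewrite /del_edge insubdK. Qed.
Lemma del_edge_val (d : fE D) : del_edge (val d) = d.
Proof. by rewrite /del_edge valKd. Qed.
Lemma del_edge_inj (e e' : fE B) : e != eps -> e' != eps -> del_edge e = del_edge e' -> e = e'.
Proof. by move=> H H' E; rewrite -(del_edgeK H) -(del_edgeK H') E. Qed.

(* The tilde and hat copies of an edge of [B] in [C]; the hat copy of [e2] is
   the merged edge, i.e. the tilde copy of [e3].  An upper (lower) edge of [B]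
   is also an upper (lower) edge of [C], above (below) the cocontraction
   (contraction) joining its two copies. *)
Definition edge_t (e : fE B) : fE C := inl (inl (del_edge e)).
Definition edge_h (e : fE B) : fE C :=
  match (insub (del_edge e) : option {d : fE D | d != e2}) with
  | Some d => inl (inr d) | None => inl (inl e3) end.
Definition edge_top (e : fE B) : fE C :=
  match (insub (del_edge e) : option (Uedge e2)) with Some u => inr (inl u) | None => edge_t e end.
Definition edge_bot (e : fE B) : fE C :=
  match (insub (del_edge e) : option (Ledge e3)) with Some l => inr (inr l) | None => edge_t e end.

Lemma edge_h_e2 : edge_h (val e2) = inl (inl e3).
Proof. by rewrite /edge_h del_edge_val insubF // eqxx. Qed.

Lemma edge_hE (e : fE B) (H : del_edge e != e2) : edge_h e = inl (inr (Sub (del_edge e) H)).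
Proof. by rewrite /edge_h insubT. Qed.

Lemma edge_t_inj e e' : e != eps -> e' != eps -> edge_t e = edge_t e' -> e = e'.
Proof. by move=> H H' [] /del_edge_inj; apply. Qed.

Lemma edge_h_inj e e' : e != eps -> e' != eps -> edge_h e = edge_h e' -> e = e'.
Proof.
move=> H H'; rewrite /edge_h.
case: insubP => [d Hd Ed|Hd]; case: insubP => [d' Hd' Ed'|Hd'] //.
- by move=> [] Edd; apply: (del_edge_inj H H'); rewrite -Ed -Ed' Edd.
- by move=> _; apply: (del_edge_inj H H'); move: Hd Hd'; rewrite !negbK => /eqP -> /eqP ->.
Qed.

Local Notation VT := (vt e2 e3).
Local Notation VH := (vh e2 e3).
Local Notation VW := (vW e2 e3).
Local Notation VCW := (vCW e2 e3).

Lemma kappa_neq_vD (v : fV D) : kappa <> val v.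
Proof. by move=> E; move: (valP v); rewrite -E eqxx andbF. Qed.
Lemma iota_neq_vD (v : fV D) : iota <> val v.
Proof. by move=> E; move: (valP v); rewrite -E eqxx. Qed.

Lemma lo_h_not_vt (d : fE D) v : lo_h e2 e3 d <> Some (VT v).
Proof.
rewrite /lo_h; case: (d == e3) => //; case: (lo d) => [w|] //.
by case: (insub d).
Qed.

Lemma lo_t_not_vh (d : fE D) v : d != e3 -> lo_t e2 e3 d <> Some (VH v).
Proof.
rewrite /lo_t => /negbTE ->; case: (lo d) => [w|] //.
by case: (insub d).
Qed.

Lemma up_t_not_vh (d : fE D) v : up_t e2 e3 d <> Some (VH v).
Proof.
rewrite /up_t; case: (d == e2) => //; case: (up d) => [w|] //.
by case: (insub d).
Qed.

Lemma up_h_not_vt (d : fE D) v : up_h e2 e3 d <> Some (VT v).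
Proof. rewrite /up_h; case: (up d) => [w|] //; by case: (insub d). Qed.

Lemma lo_vD_neq_eps (e : fE B) (v : fV D) : lo e = Some (val v) -> e != eps.
Proof.
move=> H; apply/eqP => E; move: H; rewrite E lo_eps => -[] Ek.
exact: (kappa_neq_vD Ek).
Qed.

Lemma up_vD_neq_eps (e : fE B) (v : fV D) : up e = Some (val v) -> e != eps.
Proof.
move=> H; apply/eqP => E; move: H; rewrite E up_eps => -[] Ek.
exact: (iota_neq_vD Ek).
Qed.

Lemma loC_tilde (e' : fE C) (v : fV D) :
  loC e' = Some (VT v) <-> exists e, lo e = Some (val v) /\ edge_t e = e'.
Proof.
split.
- case: e' => [[d|d]|[u|l]] //=.
  + rewrite /lo_t; case: eqP => [_|_]; first by move/lo_h_not_vt.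
    case Ed: (lo d) => [w|]; last by case: (insub d).
    case=> Ew; exists (val d); rewrite /edge_t del_edge_val; split => //.
    by apply/loD_Some; rewrite Ed Ew.
  + by move/lo_h_not_vt.
- case=> e [He <-]; have Hne := lo_vD_neq_eps He.
  rewrite /= /lo_t; case: eqP => [Ed|_].
    by move: He; rewrite -(del_edgeK Hne) Ed lo_e3 => -[] Ek; case: (kappa_neq_vD Ek).
  have -> : lo (del_edge e) = Some v by apply/loD_Some; rewrite del_edgeK.
  done.
Qed.

Lemma upC_tilde (e' : fE C) (v : fV D) :
  upC e' = Some (VT v) <-> exists e, up e = Some (val v) /\ edge_t e = e'.
Proof.
split.
- case: e' => [[d|d]|[u|l]] //=.
  + rewrite /up_t; case: eqP => [_|_] //.
    case Ed: (up d) => [w|]; last by case: (insub d).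
    case=> Ew; exists (val d); rewrite /edge_t del_edge_val; split => //.
    by apply/upD_Some; rewrite Ed Ew.
  + by move/up_h_not_vt.
- case=> e [He <-]; have Hne := up_vD_neq_eps He.
  rewrite /= /up_t; case: eqP => [Ed|_].
    by move: He; rewrite -(del_edgeK Hne) Ed up_e2 => -[] Ek; case: (iota_neq_vD Ek).
  have -> : up (del_edge e) = Some v by apply/upD_Some; rewrite del_edgeK.
  done.
Qed.

Lemma del_edge_neq_e2 (e : fE B) : e != eps -> e != val e2 -> del_edge e != e2.
Proof. by move=> H1 H2; apply: contra H2 => /eqP <-; rewrite del_edgeK. Qed.

Lemma edge_h_val (d : {x : fE D | x != e2}) : edge_h (val (val d)) = inl (inr d).
Proof.
have H : del_edge (val (val d)) != e2 by rewrite del_edge_val (valP d).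
rewrite (edge_hE H).
by congr (inl (inr _)); apply: val_inj; rewrite SubK del_edge_val.
Qed.

Lemma loC_hat (e' : fE C) (v : fV D) :
  loC e' = Some (VH v) <-> exists e, lo e = Some (val v) /\ edge_h e = e'.
Proof.
split.
- case: e' => [[d|d]|[u|l]] //=.
  + case: (boolP (d == e3)) => [/eqP Ed|Hd]; last by move/(lo_t_not_vh Hd).
    rewrite /lo_t Ed eqxx /lo_h; case: eqP => // _.
    case Ed2: (lo e2) => [w|]; last by case: (insub e2).
    case=> Ew; exists (val e2); rewrite edge_h_e2; split => //.
    by apply/loD_Some; rewrite Ed2 Ew.
  + rewrite /lo_h; case: eqP => // _.
    case Ed: (lo (val d)) => [w|]; last by case: (insub (val d)).
    case=> Ew; exists (val (val d)); rewrite edge_h_val; split => //.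
    by apply/loD_Some; rewrite Ed Ew.
- case=> e [He <-]; have Hne := lo_vD_neq_eps He.
  case: (boolP (e == val e2)) => [/eqP Ee|Ee].
  + rewrite Ee edge_h_e2 /= /lo_t eqxx /lo_h; case: eqP => [E23|_].
      by move: He; rewrite Ee E23 lo_e3 => -[] Ek; case: (kappa_neq_vD Ek).
    have -> : lo e2 = Some v by apply/loD_Some; rewrite -Ee.
    done.
  + rewrite (edge_hE (del_edge_neq_e2 Hne Ee)) /= /lo_h; case: eqP => [Ed|_].
      by move: He; rewrite -(del_edgeK Hne) Ed lo_e3 => -[] Ek; case: (kappa_neq_vD Ek).
    have -> : lo (del_edge e) = Some v by apply/loD_Some; rewrite del_edgeK.
    done.
Qed.

Lemma upC_hat (e' : fE C) (v : fV D) :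
  upC e' = Some (VH v) <-> exists e, up e = Some (val v) /\ edge_h e = e'.
Proof.
split.
- case: e' => [[d|d]|[u|l]] //=.
  + by move/up_t_not_vh.
  + rewrite /up_h.
    case Ed: (up (val d)) => [w|]; last by case: (insub (val d)).
    case=> Ew; exists (val (val d)); rewrite edge_h_val; split => //.
    by apply/upD_Some; rewrite Ed Ew.
- case=> e [He <-]; have Hne := up_vD_neq_eps He.
  have Ee : e != val e2.
    by apply/eqP => Ee; move: He; rewrite Ee up_e2 => -[] Ek; case: (iota_neq_vD Ek).
  rewrite (edge_hE (del_edge_neq_e2 Hne Ee)) /= /up_h.
  have -> : up (del_edge e) = Some v by apply/upD_Some; rewrite del_edgeK.
  done.
Qed.

Local Notation VCo := (@vCocon D e2 e3).
Local Notation VCn := (@vCon D e2 e3).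

Lemma lo_h_cases (d : fE D) :
  [\/ lo_h e2 e3 d = Some VCW, exists w, lo_h e2 e3 d = Some (VH w),
      exists l, lo_h e2 e3 d = Some (VCn l) | lo_h e2 e3 d = None].
Proof.
rewrite /lo_h; case: eqP => _; first by constructor 1.
case: (lo d) => [w|]; first by constructor 2; exists w.
case: (insub d) => [l|] /=; [constructor 3; by exists l | by constructor 4].
Qed.

Lemma lo_t_cases (d : fE D) : d != e3 ->
  [\/ exists w, lo_t e2 e3 d = Some (VT w),
      exists l, lo_t e2 e3 d = Some (VCn l) | lo_t e2 e3 d = None].
Proof.
rewrite /lo_t => /negbTE ->.
case: (lo d) => [w|]; first by constructor 1; exists w.
case: (insub d) => [l|] /=; [constructor 2; by exists l | by constructor 3].
Qed.

Lemma up_t_cases (d : fE D) :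
  [\/ up_t e2 e3 d = Some VW, exists w, up_t e2 e3 d = Some (VT w),
      exists u, up_t e2 e3 d = Some (VCo u) | up_t e2 e3 d = None].
Proof.
rewrite /up_t; case: eqP => _; first by constructor 1.
case: (up d) => [w|]; first by constructor 2; exists w.
case: (insub d) => [u|] /=; [constructor 3; by exists u | by constructor 4].
Qed.

Lemma up_h_cases (d : fE D) :
  [\/ exists w, up_h e2 e3 d = Some (VH w),
      exists u, up_h e2 e3 d = Some (VCo u) | up_h e2 e3 d = None].
Proof.
rewrite /up_h; case: (up d) => [w|]; first by constructor 1; exists w.
case: (insub d) => [u|] /=; [constructor 2; by exists u | by constructor 3].
Qed.

Ltac discr_cases :=
  let E := fresh in let H := fresh in
  move=> E H; (lazymatch type of E with ex _ => case: E => ? E | _ => idtac end);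
  rewrite E in H; discriminate.

Lemma loC_cocon (e' : fE C) u : loC e' = Some (VCo u) <-> e' = inr (inl u).
Proof.
split; last by move=> ->.
case: e' => [[d|d]|[u'|l]] //=.
- case: (boolP (d == e3)) => [/eqP Ed|Hd].
  + rewrite /lo_t Ed eqxx; by case: (lo_h_cases e2); discr_cases.
  + by case: (lo_t_cases Hd); discr_cases.
- by case: (lo_h_cases (val d)); discr_cases.
- by case=> ->.
Qed.

Lemma upC_cocon (e' : fE C) u (e : fE B) : del_edge e = val u ->
  upC e' = Some (VCo u) <-> e' = edge_t e \/ e' = edge_h e.
Proof.
move=> Eu; have /andP [/eqP Hu1 Hu2] := valP u.
have Hr : edge_h e = inl (inr (Sub (val u) Hu2)).
  by rewrite /edge_h Eu insubT.
split.
- case: e' => [[d|d]|[u'|l]] //=.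
  + rewrite /up_t; case: eqP => // _; case: (up d) => // .
    case: insubP => // u' _ Ed [] Eu'; left; rewrite /edge_t Eu -Eu' Ed //.
  + rewrite /up_h; case: (up (val d)) => //.
    case: insubP => // u' _ Ed [] Eu'; right; rewrite Hr; congr (inl (inr _)).
    by apply: val_inj; rewrite /= -Eu' Ed.
- case=> ->; rewrite ?Hr /= /edge_t ?Eu.
  + rewrite /up_t (negbTE Hu2) Hu1 /=; by rewrite valK.
  + rewrite /up_h Hu1 /=; by rewrite valK.
Qed.

Lemma upC_con (e' : fE C) l : upC e' = Some (VCn l) <-> e' = inr (inr l).
Proof.
split; last by move=> ->.
case: e' => [[d|d]|[u'|l']] //=.
- by case: (up_t_cases d); discr_cases.
- by case: (up_h_cases (val d)); discr_cases.
- by case=> ->.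
Qed.

Lemma loC_con (e' : fE C) l (e : fE B) : del_edge e = val l ->
  loC e' = Some (VCn l) <-> e' = edge_t e \/ e' = edge_h e.
Proof.
move=> El; have /andP [/eqP Hl1 Hl3] := valP l.
split.
- case: e' => [[d|d]|[u'|l']] //=.
  + rewrite /lo_t; case: eqP => [Ed|_].
    * rewrite /lo_h; case: eqP => // _; case: (lo e2) => //.
      case: insubP => // l' _ E2 [] El'; right.
      by rewrite /edge_h El -El' E2 insubF ?eqxx // Ed.
    * case: (lo d) => //; case: insubP => // l' _ Ed [] El'; left.
      by rewrite /edge_t El -El' Ed.
  + rewrite /lo_h; case: eqP => // _; case: (lo (val d)) => //.
    case: insubP => // l' _ Ed [] El'; right.
    have Hn : del_edge e != e2 by rewrite El -El' Ed (valP d).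
    rewrite (edge_hE Hn); congr (inl (inr _)); apply: val_inj.
    by rewrite SubK El -El' Ed.
- case=> ->.
  + by rewrite /= /edge_t El /lo_t (negbTE Hl3) Hl1 /= valK.
  + rewrite /edge_h El; case: insubP => [d Hd Ed|].
    * by rewrite /= /lo_h Ed (negbTE Hl3) Hl1 /= valK.
    * rewrite negbK => /eqP E2.
      by rewrite /= /lo_t eqxx /lo_h -E2 (negbTE Hl3) Hl1 /= valK.
Qed.

Lemma loC_wk (e' : fE C) : loC e' <> Some VW.
Proof.
case: e' => [[d|d]|[u'|l']] //=.
- case: (boolP (d == e3)) => [/eqP Ed|Hd].
  + rewrite /lo_t Ed eqxx; by case: (lo_h_cases e2); discr_cases.
  + by case: (lo_t_cases Hd); discr_cases.
- by case: (lo_h_cases (val d)); discr_cases.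
Qed.

Lemma upC_wk (e' : fE C) : upC e' = Some VW <-> e' = edge_t (val e2).
Proof.
rewrite /edge_t del_edge_val; split; last by move=> -> /=; rewrite /up_t eqxx.
case: e' => [[d|d]|[u'|l']] //=.
- rewrite /up_t; case: eqP => [->//|_]; case: (up d) => //; by case: (insub d).
- by case: (up_h_cases (val d)); discr_cases.
Qed.

Lemma loC_cowk (e' : fE C) : loC e' = Some VCW <-> e' = edge_h (val e3).
Proof.
split.
- case: e' => [[d|d]|[u'|l']] //=.
  + case: (boolP (d == e3)) => [/eqP Ed|Hd]; last by case: (lo_t_cases Hd); discr_cases.
    rewrite /lo_t Ed eqxx /lo_h; case: eqP => [E23|_]; last first.
      by case: (lo e2) => //; case: (insub e2).
    have E' : val e3 = val e2 by rewrite E23.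
    by move=> _; rewrite E' edge_h_e2.
  + rewrite /lo_h; case: eqP => [Ed|_]; last first.
      by case: (lo (val d)) => //; case: (insub (val d)).
    have E' : val e3 = val (val d) by apply: congr1; symmetry; exact Ed.
    by move=> _; rewrite E' edge_h_val.
- move=> ->; case: (boolP (e3 == e2)) => [/eqP E|Hn].
  + have E' : val e3 = val e2 by rewrite E.
    by rewrite E' edge_h_e2 /= /lo_t eqxx /lo_h E eqxx.
  + have Hn' : del_edge (val e3) != e2 by rewrite del_edge_val.
    by rewrite (edge_hE Hn') /= del_edge_val /lo_h eqxx.
Qed.

Lemma upC_cowk (e' : fE C) : upC e' <> Some VCW.
Proof.
case: e' => [[d|d]|[u'|l']] //=.
- by case: (up_t_cases d); discr_cases.
- by case: (up_h_cases (val d)); discr_cases.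
Qed.

Lemma upC_None (e' : fE C) : upC e' = None <-> exists u, e' = inr (inl u).
Proof.
have Hh (d : fE D) : d != e2 -> up d = None -> omap (VCo) (insub d) <> None.
  move=> Hd Eu; case: insubP => //; by rewrite Eu eqxx Hd.
split; last by case=> u ->.
case: e' => [[d|d]|[u'|l']] //=; last by exists u'.
- rewrite /up_t; case: eqP => // /eqP Hd; case Eu: (up d) => //.
  by move/(Hh _ Hd Eu).
- rewrite /up_h; case Eu: (up (val d)) => //.
  by move/(Hh _ (valP d) Eu).
Qed.

Lemma loC_None (e' : fE C) : loC e' = None <-> exists l, e' = inr (inr l).
Proof.
have Hh (d : fE D) : d != e3 -> lo d = None -> omap (VCn) (insub d) <> None.
  move=> Hd Eu; case: insubP => //; by rewrite Eu eqxx Hd.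
have Hh2 (d : fE D) : lo_h e2 e3 d <> None.
  rewrite /lo_h; case: eqP => // /eqP Hd; case El: (lo d) => //.
  by move/(Hh _ Hd El).
split; last by case=> l ->.
case: e' => [[d|d]|[u'|l']] //=; last by exists l'.
- rewrite /lo_t; case: eqP => [_|/eqP Hd]; first by move/Hh2.
  case El: (lo d) => //.
  by move/(Hh _ Hd El).
- by move/Hh2.
Qed.

Variable At : Type.
Local Notation atom_t := (@relabel At _ _ edge_t).
Local Notation atom_h := (@relabel At _ _ edge_h).
Local Notation atom_top := (@relabel At _ _ edge_top).
Local Notation atom_bot := (@relabel At _ _ edge_bot).

Lemma realizes_tilde (i : inst (At * fE B)) (v : fV D) :
  realizes i (val v) -> realizes (imap atom_t i) (VT v).
Proof.
apply: realizes_relabel_edges => //.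
- move=> e1 e1' He1 He1'.
  by apply: edge_t_inj; [exact: (lo_vD_neq_eps He1)|exact: (lo_vD_neq_eps He1')].
- move=> e1 e1' He1 He1'.
  by apply: edge_t_inj; [exact: (up_vD_neq_eps He1)|exact: (up_vD_neq_eps He1')].
- by move=> e'; exact: loC_tilde.
- by move=> e'; exact: upC_tilde.
Qed.

Lemma realizes_hat (i : inst (At * fE B)) (v : fV D) :
  realizes i (val v) -> realizes (imap atom_h i) (VH v).
Proof.
apply: realizes_relabel_edges => //.
- move=> e1 e1' He1 He1'.
  by apply: edge_h_inj; [exact: (lo_vD_neq_eps He1)|exact: (lo_vD_neq_eps He1')].
- move=> e1 e1' He1 He1'.
  by apply: edge_h_inj; [exact: (up_vD_neq_eps He1)|exact: (up_vD_neq_eps He1')].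
- by move=> e'; exact: loC_hat.
- by move=> e'; exact: upC_hat.
Qed.

Lemma up_None_neq_eps (e : fE B) : up e = None -> e != eps.
Proof. by move=> H; apply/eqP => E; move: H; rewrite E up_eps. Qed.
Lemma lo_None_neq_eps (e : fE B) : lo e = None -> e != eps.
Proof. by move=> H; apply/eqP => E; move: H; rewrite E lo_eps. Qed.

Lemma top_edge_spec (e : fE B) : up e = None ->
  exists u : Uedge e2, del_edge e = val u /\ edge_top e = inr (inl u).
Proof.
move=> Hu; have Hne := up_None_neq_eps Hu.
have Hn2 : del_edge e != e2 by apply/eqP => E; move: Hu; rewrite -(del_edgeK Hne) E up_e2.
have HP : (up (del_edge e) == None) && (del_edge e != e2).
  by rewrite Hn2 andbT; apply/eqP/upD_None; left; rewrite del_edgeK.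
by exists (Sub (del_edge e) HP); rewrite /edge_top insubT.
Qed.

Lemma bot_edge_spec (e : fE B) : lo e = None ->
  exists l : Ledge e3, del_edge e = val l /\ edge_bot e = inr (inr l).
Proof.
move=> Hl; have Hne := lo_None_neq_eps Hl.
have Hn3 : del_edge e != e3 by apply/eqP => E; move: Hl; rewrite -(del_edgeK Hne) E lo_e3.
have HP : (lo (del_edge e) == None) && (del_edge e != e3).
  by rewrite Hn3 andbT; apply/eqP/loD_None; left; rewrite del_edgeK.
by exists (Sub (del_edge e) HP); rewrite /edge_bot insubT.
Qed.

Lemma Uedge_up_None (u : Uedge e2) : up (val (val u)) = None.
Proof. by have /andP [/eqP /upD_None [//|E] Hu2] := valP u; rewrite E eqxx in Hu2. Qed.

Lemma Ledge_lo_None (l : Ledge e3) : lo (val (val l)) = None.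
Proof. by have /andP [/eqP /loD_None [//|E] Hl3] := valP l; rewrite E eqxx in Hl3. Qed.

Lemma realizes_cocon (p : At * fE B) (u : Uedge e2) :
  del_edge p.2 = val u -> edge_top p.2 = inr (inl u) ->
  realizes (F := C) (ICocon (atom_top p) (atom_t p) (atom_h p)) (VCo u).
Proof.
move=> Eu Ef; split => //.
- rewrite /= /atom_top /= Ef; apply: exact_labels1 => e; exact: loC_cocon.
- rewrite /= /atom_t /atom_h /=; apply: exact_labels2; last by move=> e; apply: upC_cocon.
  have /andP [_ Hu2] := valP u.
  by rewrite /edge_t /edge_h Eu insubT.
Qed.

Lemma realizes_con (p : At * fE B) (l : Ledge e3) :
  del_edge p.2 = val l -> edge_bot p.2 = inr (inr l) ->
  realizes (F := C) (ICon (atom_t p) (atom_h p) (atom_bot p)) (VCn l).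
Proof.
move=> El Ef; split => //.
- rewrite /= /atom_t /atom_h /=; apply: exact_labels2; last by move=> e; apply: loC_con.
  have /andP [_ Hl3] := valP l.
  rewrite /edge_t /edge_h El; case: insubP => [d _ _ //|_].
  by apply/eqP => -[] E; have E' : val l = e3 := E; move: Hl3; rewrite E' eqxx.
- rewrite /= /atom_bot /= Ef; apply: exact_labels1 => e; exact: upC_con.
Qed.

Lemma realizes_wk (x : At) : realizes (F := C) (IWk (x, edge_t (val e2))) VW.
Proof.
split => //.
- by apply: exact_labels0 => e; apply: loC_wk.
- by apply: exact_labels1 => e; apply: upC_wk.
Qed.

Lemma realizes_cowk (x : At) : realizes (F := C) (ICowk (x, edge_h (val e3))) VCW.
Proof.
split => //.
- by apply: exact_labels1 => e; apply: loC_cowk.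
- by apply: exact_labels0 => e; apply: upC_cowk.
Qed.

Lemma exact_labels_premiss (a' : fml (At * fE B)) :
  exact_labels (labels a') (fun e => up e = None) ->
  exact_labels (labels (fmap atom_top a')) (fun e => upC e = None).
Proof.
move=> H; rewrite labels_relabel; apply: exact_labels_map H _ _.
- move=> e e' He He'; have [u [Eu Fu]] := top_edge_spec He; have [u' [Eu' Fu']] := top_edge_spec He'.
  rewrite Fu Fu' => -[] E.
  by apply: (del_edge_inj (up_None_neq_eps He) (up_None_neq_eps He')); rewrite Eu Eu' E.
- move=> e'; rewrite upC_None; split.
  + case=> u ->; exists (val (val u)); split; first exact: Uedge_up_None.
    have [u' [Eu Fu]] := top_edge_spec (Uedge_up_None u); rewrite Fu; congr (inr (inl _)).
    by apply: val_inj; rewrite -Eu del_edge_val.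
  + by case=> e [He <-]; have [u [_ Fu]] := top_edge_spec He; exists u.
Qed.

Lemma exact_labels_conclusion (b' : fml (At * fE B)) :
  exact_labels (labels b') (fun e => lo e = None) ->
  exact_labels (labels (fmap atom_bot b')) (fun e => loC e = None).
Proof.
move=> H; rewrite labels_relabel; apply: exact_labels_map H _ _.
- move=> e e' He He'; have [u [Eu Fu]] := bot_edge_spec He; have [u' [Eu' Fu']] := bot_edge_spec He'.
  rewrite Fu Fu' => -[] E.
  by apply: (del_edge_inj (lo_None_neq_eps He) (lo_None_neq_eps He')); rewrite Eu Eu' E.
- move=> e'; rewrite loC_None; split.
  + case=> l ->; exists (val (val l)); split; first exact: Ledge_lo_None.
    have [l' [El Fl]] := bot_edge_spec (Ledge_lo_None l); rewrite Fl; congr (inr (inr _)).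
    by apply: val_inj; rewrite -El del_edge_val.
  + by case=> e [He <-]; have [u [_ Fu]] := bot_edge_spec He; exists u.
Qed.

Variable bar : At -> At.
Variables (a' b' : fml (At * fE B)) (s1 s2 s3 : seq (step (At * fE B)))
  (ci ck : ctx (At * fE B)) (ii ik : inst (At * fE B)) (xe : At).
Hypotheses (Hd1 : deriv a' s1 (plug ci (ipre ii)))
  (Hd2 : deriv (plug ci (icon ii)) s2 (plug ck (ipre ik)))
  (Hd3 : deriv (plug ck (icon ik)) s3 b')
  (Hii : int_redex bar eps ii xe (val e2)) (Hik : cut_redex bar eps ik xe (val e3))
  (Hpre : exact_labels (labels a') (fun e => up e = None))
  (Hcon : exact_labels (labels b') (fun e => lo e = None)).
Local Notation S := (atomic_trace s1 ++ atomic_trace s2 ++ atomic_trace s3).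
Hypotheses (HrS : forall i, List.In i S -> exists v, realizes i v)
  (HcntS : forall v, count (fun i => inst_vertex i == Some v) S = (v != iota) && (v != kappa))
  (HokS : forall i, List.In i S -> inst_ok bar (imap fst i)).

Lemma realizes_S i : List.In i S -> exists v : fV D, realizes i (val v).
Proof.
move=> Hi; have [v Hv] := HrS Hi; have Ho := realizes_vertex Hv.
case E: (insub v : option (fV D)) => [v'|].
  by exists v'; rewrite -(proj1 (insub_vD_Some _ _) E).
have Hv0 : count (fun i => inst_vertex i == Some v) S = 0.
  by rewrite HcntS; case/insub_vD_None: E => ->; rewrite eqxx ?andbF.
by have := count_In_eq0 Hv0 Hi; rewrite /= Ho eqxx.
Qed.

Lemma S_atom_neq_eps i : List.In i S ->
  forall x, List.In x (fatoms (ipre i) ++ fatoms (icon i)) -> x.2 != eps.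
Proof.
move=> Hi x Hx; have [v [_ [_ Hp] [_ Hc]]] := realizes_S Hi.
case: (List.in_app_or _ _ _ Hx) => {}Hx.
- by apply: (@lo_vD_neq_eps _ v); apply/Hp; apply: In_labels.
- by apply: (@up_vD_neq_eps _ v); apply/Hc; apply: In_labels.
Qed.

Definition subst_t (x : At * fE B) : fml (At * fE C) :=
  if x.2 == eps then Ft else Atm (atom_t x).
Definition subst_h (x : At * fE B) : fml (At * fE C) :=
  if x.2 == eps then Ff else Atm (atom_h x).

Lemma derives_subst_t x s y : deriv x s y ->
  (forall i, List.In i (atomic_trace s) -> List.In i S) ->
  derives (fsubst subst_t x) (fsubst subst_t y) (map (imap atom_t) (atomic_trace s)).
Proof.
move=> Hd sS; apply: derives_fsubst Hd _ => i /sS Hi z Hz.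
by rewrite /subst_t (negbTE (S_atom_neq_eps Hi Hz)).
Qed.

Lemma derives_subst_h x s y : deriv x s y ->
  (forall i, List.In i (atomic_trace s) -> List.In i S) ->
  derives (fsubst subst_h x) (fsubst subst_h y) (map (imap atom_h) (atomic_trace s)).
Proof.
move=> Hd sS; apply: derives_fsubst Hd _ => i /sS Hi z Hz.
by rewrite /subst_h (negbTE (S_atom_neq_eps Hi Hz)).
Qed.

Lemma In_S1 i : List.In i (atomic_trace s1) -> List.In i S.
Proof. by move=> H; apply: List.in_or_app; left. Qed.
Lemma In_S2 i : List.In i (atomic_trace s2) -> List.In i S.
Proof. by move=> H; apply: List.in_or_app; right; apply: List.in_or_app; left. Qed.
Lemma In_S3 i : List.In i (atomic_trace s3) -> List.In i S.
Proof. by move=> H; apply: List.in_or_app; right; apply: List.in_or_app; right. Qed.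

(* The edge of [C] obtained by identifying the tilde copy of [e3] with the hat
   copy of [e2]. *)
Definition z_merged : fml (At * fE C) := Atm (bar xe, inl (inl e3)).
Definition w_t : At * fE C := (bar xe, edge_t (val e2)).
Definition w_h : At * fE C := (bar xe, edge_h (val e3)).

Lemma edge_t_e3 : edge_t (val e3) = inl (inl e3).
Proof. by rewrite /edge_t del_edge_val. Qed.

Lemma derives_t_int : derives (fsubst subst_t (ipre ii)) (fsubst subst_t (icon ii)) [:: IWk w_t].
Proof.
case: Hii => -> /=; rewrite /subst_t /= eqxx (negbTE e2_neq_eps).
- exact: derives_trans0 (derives_orfV _) (derives_orr _ (derives_wk _)).
- apply: derives_trans0 (derives_orfV _) _.
  exact: derives_trans0 (derives_orC _ _) (derives_orl _ (derives_wk _)).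
Qed.

Lemma derives_t_cut : derives (fsubst subst_t (ipre ik)) z_merged [::].
Proof.
rewrite /z_merged -edge_t_e3.
case: Hik => -> /=; rewrite /subst_t /= eqxx (negbTE e3_neq_eps).
- exact: derives_trans0 (derives_andC _ _) (derives_andt _).
- exact: derives_andt.
Qed.

Lemma derives_h_int :
  derives (FAnd z_merged (fsubst subst_h (ipre ii))) (fsubst subst_h (icon ii)) [::].
Proof.
rewrite /z_merged -edge_h_e2.
case: Hii => -> /=; rewrite /subst_h /= eqxx (negbTE e2_neq_eps).
- apply: derives_trans0 (derives_andt _) _.
  exact: derives_trans0 (derives_orfV _) (derives_orC _ _).
- exact: derives_trans0 (derives_andt _) (derives_orfV _).
Qed.

Lemma derives_h_cut : derives (fsubst subst_h (ipre ik)) (fsubst subst_h (icon ik)) [:: ICowk w_h].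
Proof.
case: Hik => -> /=; rewrite /subst_h /= eqxx (negbTE e3_neq_eps).
- exact: derives_trans (derives_andr _ (derives_cowk _)) (derives_andt _).
- apply: derives_trans (derives_andl _ (derives_cowk _)) _.
  exact: derives_trans0 (derives_andC _ _) (derives_andt _).
Qed.

Definition trace_t s := map (imap atom_t) (atomic_trace s).
Definition trace_h s := map (imap atom_h) (atomic_trace s).

Definition tilde_trace := trace_t s1 ++ IWk w_t :: trace_t s2 ++ trace_t s3.
Definition hat_trace := trace_h s1 ++ trace_h s2 ++ ICowk w_h :: trace_h s3.

Lemma derives_tilde :
  derives (fsubst subst_t a') (FOr (fsubst subst_t b') z_merged) tilde_trace.
Proof.
have T2 : derives (fsubst subst_t (plug ci (ipre ii))) (fsubst subst_t (plug ci (icon ii)))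
    [:: IWk w_t] by rewrite !fsubst_plug; apply: derives_plug; exact: derives_t_int.
have T4 : derives (fsubst subst_t (plug ck (ipre ik)))
    (FOr (fsubst subst_t (plug ck (icon ik))) z_merged) [::].
  rewrite !fsubst_plug; have -> : fsubst subst_t (icon ik) = Ff by case: Hik => ->.
  exact: derives_trans0 (derives_plug _ derives_t_cut) (derives_pull_out _ _).
apply: derives_trans (derives_subst_t Hd1 (@In_S1)) _.
apply: derives_trans T2 _; apply: derives_trans (derives_subst_t Hd2 (@In_S2)) _.
exact: derives_trans0 T4 (derives_orl _ (derives_subst_t Hd3 (@In_S3))).
Qed.

Lemma derives_hat :
  derives (FAnd z_merged (fsubst subst_h a')) (fsubst subst_h b') hat_trace.
Proof.
have H2 : derives (FAnd z_merged (fsubst subst_h (plug ci (ipre ii))))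
    (fsubst subst_h (plug ci (icon ii))) [::].
  rewrite !fsubst_plug.
  exact: derives_trans0 (derives_push_in _ _ _) (derives_plug _ derives_h_int).
have H4 : derives (fsubst subst_h (plug ck (ipre ik))) (fsubst subst_h (plug ck (icon ik)))
    [:: ICowk w_h] by rewrite !fsubst_plug; apply: derives_plug; exact: derives_h_cut.
apply: derives_trans (derives_andr _ (derives_subst_h Hd1 (@In_S1))) _.
apply: derives_trans0 H2 _; apply: derives_trans (derives_subst_h Hd2 (@In_S2)) _.
exact: derives_trans H4 (derives_subst_h Hd3 (@In_S3)).
Qed.

Lemma In_premiss_neq_eps x : List.In x (fatoms a') -> x.2 != eps.
Proof. by move=> /In_labels /(proj2 Hpre) /up_None_neq_eps. Qed.
Lemma In_conclusion_neq_eps x : List.In x (fatoms b') -> x.2 != eps.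
Proof. by move=> /In_labels /(proj2 Hcon) /lo_None_neq_eps. Qed.

Definition cocon_trace := [seq ICocon (atom_top x) (atom_t x) (atom_h x) | x <- fatoms a'].
Definition con_trace := [seq ICon (atom_t x) (atom_h x) (atom_bot x) | x <- fatoms b'].
Definition se_trace := cocon_trace ++ tilde_trace ++ hat_trace ++ con_trace.

Lemma derives_se : derives (fmap atom_top a') (fmap atom_bot b') se_trace.
Proof.
have fsubst_id sg r (x : fml (At * fE B)) : (forall z, List.In z (fatoms x) -> z.2 != eps) ->
    (forall z, z.2 != eps -> sg z = Atm (r z)) -> fsubst sg x = fmap r x.
  by move=> Hx Hsg; apply: fsubst_fmap => z /Hx; apply: Hsg.
have Ht x : (forall z, List.In z (fatoms x) -> z.2 != eps) -> fsubst subst_t x = fmap atom_t x.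
  by move=> Hx; apply: fsubst_id Hx _ => z Hz; rewrite /subst_t (negbTE Hz).
have Hh x : (forall z, List.In z (fatoms x) -> z.2 != eps) -> fsubst subst_h x = fmap atom_h x.
  by move=> Hx; apply: fsubst_id Hx _ => z Hz; rewrite /subst_h (negbTE Hz).
have Tt := derives_tilde; have Th := derives_hat.
rewrite (Ht a') ?(Ht b') ?(Hh a') ?(Hh b') in Tt Th;
  try by [apply: In_premiss_neq_eps | apply: In_conclusion_neq_eps].
apply: derives_trans (derives_cocontract _ _ _ _) _.
apply: derives_trans (derives_andl _ Tt) _.
apply: derives_trans0 _ (derives_trans (derives_orr _ Th) (derives_contract _ _ _ _)).
apply: derives_trans0 (derives_andC _ _) _.
apply: derives_trans0 (derives_andr _ (derives_orC _ _)) _.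
apply: derives_trans0 (derives_switch _ _ _) _; apply: derives_trans0 (derives_orC _ _) _.
exact: derives_orr _ (derives_andC _ _).
Qed.

Lemma realizes_trace_t j : List.In j S ->
  exists v : fV D, realizes (imap atom_t j) (VT v) /\ inst_vertex j = Some (val v).
Proof.
by move=> /realizes_S [v Hv]; exists v; split; [apply: realizes_tilde | apply: realizes_vertex].
Qed.

Lemma realizes_trace_h j : List.In j S ->
  exists v : fV D, realizes (imap atom_h j) (VH v) /\ inst_vertex j = Some (val v).
Proof.
by move=> /realizes_S [v Hv]; exists v; split; [apply: realizes_hat | apply: realizes_vertex].
Qed.

Lemma realizes_cocon_trace x : List.In x (fatoms a') ->
  exists u, [/\ realizes (ICocon (atom_top x) (atom_t x) (atom_h x)) (VCo u),
                del_edge x.2 = val u & x.2 != eps].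
Proof.
move=> Hx; have Hu : up x.2 = None by apply/(proj2 Hpre); apply: In_labels.
have [u [E1 E2]] := top_edge_spec Hu; exists u; split=> //; last exact: up_None_neq_eps.
exact: realizes_cocon.
Qed.

Lemma realizes_con_trace x : List.In x (fatoms b') ->
  exists l, [/\ realizes (ICon (atom_t x) (atom_h x) (atom_bot x)) (VCn l),
                del_edge x.2 = val l & x.2 != eps].
Proof.
move=> Hx; have Hl : lo x.2 = None by apply/(proj2 Hcon); apply: In_labels.
have [l [E1 E2]] := bot_edge_spec Hl; exists l; split=> //; last exact: lo_None_neq_eps.
exact: realizes_con.
Qed.

Lemma realizable_se_trace : realizable se_trace.
Proof.
have Ht s (sS : forall i, List.In i (atomic_trace s) -> List.In i S) : realizable (trace_t s).
  apply/List.Forall_map/List.Forall_forall => j /sS /realizes_trace_t [v [Hv _]].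
  by exists (VT v).
have Hh s (sS : forall i, List.In i (atomic_trace s) -> List.In i S) : realizable (trace_h s).
  apply/List.Forall_map/List.Forall_forall => j /sS /realizes_trace_h [v [Hv _]].
  by exists (VH v).
rewrite /realizable /se_trace /tilde_trace /hat_trace !(List.Forall_app, List.Forall_cons_iff).
split.
  apply/List.Forall_map/List.Forall_forall => x /realizes_cocon_trace [u [Hu _ _]].
  by exists (VCo u).
split.
  split; first exact: Ht (@In_S1).
  split; first by exists VW; apply: realizes_wk.
  by split; [apply: Ht (@In_S2)|apply: Ht (@In_S3)].
split.
  split; first exact: Hh (@In_S1).
  split; first exact: Hh (@In_S2).
  by split; [exists VCW; apply: realizes_cowk|apply: Hh (@In_S3)].
by apply/List.Forall_map/List.Forall_forall => x /realizes_con_trace [l [Hl _ _]]; exists (VCn l).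
Qed.

Local Notation at_vertex w := (fun i => inst_vertex i == Some w).

Lemma count_S_vD (v : fV D) : count (at_vertex (val v)) S = 1.
Proof. by rewrite HcntS; have /andP [-> ->] := valP v. Qed.

Lemma count_trace_t (w : fV C) :
  count (at_vertex w) (map (imap atom_t) S) = if w is inl (inl _) then 1 else 0.
Proof.
rewrite count_map (eq_In_count (Q := fun j =>
  if w is inl (inl v) then inst_vertex j == Some (val v) else false)); last first.
  move=> j /realizes_trace_t [v [/realizes_vertex Hv ->]].
  by rewrite /preim /= Hv; case: w => [[w|w]|w].
by case: w => [[v|v]|w]; rewrite ?count_pred0 ?count_S_vD.
Qed.

Lemma count_trace_h (w : fV C) :
  count (at_vertex w) (map (imap atom_h) S) = if w is inl (inr _) then 1 else 0.
Proof.
rewrite count_map (eq_In_count (Q := fun j =>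
  if w is inl (inr v) then inst_vertex j == Some (val v) else false)); last first.
  move=> j /realizes_trace_h [v [/realizes_vertex Hv ->]].
  by rewrite /preim /= Hv; case: w => [[w|w]|w].
by case: w => [[v|v]|w]; rewrite ?count_pred0 ?count_S_vD.
Qed.

Lemma del_edge_eq_val (e : fE B) (d : fE D) : e != eps -> (del_edge e == d) = (e == val d).
Proof. by move=> H; apply/eqP/eqP => [<-|->]; rewrite ?del_edgeK ?del_edge_val. Qed.

Lemma count_cocon_trace (w : fV C) :
  count (at_vertex w) cocon_trace = if w is inr (inr (inl _)) then 1 else 0.
Proof.
rewrite count_map (eq_In_count (Q := fun x =>
  if w is inr (inr (inl u)) then x.2 == val (val u) else false)); last first.
  move=> x /realizes_cocon_trace [u [/realizes_vertex Hu Eu Hx]].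
  rewrite /preim /= Hu; case: w => [w|[w|[u'|l]]] //=.
  by rewrite -(del_edge_eq_val _ Hx) Eu; apply/eqP/eqP => [[->]|/val_inj ->].
case: w => [w|[w|[u|l]]]; rewrite ?count_pred0 //.
rewrite -(count_map snd (pred1 _)) count_uniq_mem; last exact: (proj1 Hpre).
by rewrite (_ : _ \in _) //; apply/(proj2 Hpre); apply: Uedge_up_None.
Qed.

Lemma count_con_trace (w : fV C) :
  count (at_vertex w) con_trace = if w is inr (inr (inr _)) then 1 else 0.
Proof.
rewrite count_map (eq_In_count (Q := fun x =>
  if w is inr (inr (inr l)) then x.2 == val (val l) else false)); last first.
  move=> x /realizes_con_trace [l [/realizes_vertex Hl El Hx]].
  rewrite /preim /= Hl; case: w => [w|[w|[u|l']]] //=.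
  by rewrite -(del_edge_eq_val _ Hx) El; apply/eqP/eqP => [[->]|/val_inj ->].
case: w => [w|[w|[u|l]]]; rewrite ?count_pred0 //.
rewrite -(count_map snd (pred1 _)) count_uniq_mem; last exact: (proj1 Hcon).
by rewrite (_ : _ \in _) //; apply/(proj2 Hcon); apply: Ledge_lo_None.
Qed.

Lemma count_tilde_trace (w : fV C) :
  count (at_vertex w) tilde_trace =
  at_vertex w (IWk w_t) + (if w is inl (inl _) then 1 else 0).
Proof. by rewrite -count_trace_t /tilde_trace /trace_t !map_cat !count_cat /= count_cat addnCA. Qed.

Lemma count_hat_trace (w : fV C) :
  count (at_vertex w) hat_trace =
  at_vertex w (ICowk w_h) + (if w is inl (inr _) then 1 else 0).
Proof.
rewrite -count_trace_h /hat_trace /trace_h !map_cat !count_cat /= !addnA.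
by congr (_ + _); rewrite addnC addnA.
Qed.

Lemma count_se_trace (w : fV C) : count (at_vertex w) se_trace = 1.
Proof.
rewrite /se_trace count_cat [count _ (tilde_trace ++ _)]count_cat.
rewrite [count _ (hat_trace ++ _)]count_cat count_tilde_trace count_hat_trace.
rewrite (realizes_vertex (realizes_wk _)) (realizes_vertex (realizes_cowk _)).
by rewrite count_cocon_trace count_con_trace; case: w => [[v|v]|[[[]|[]]|[u|l]]].
Qed.

Lemma inst_ok_se_trace : List.Forall (fun i => inst_ok bar (imap fst i)) se_trace.
Proof.
have Htr s (sS : forall i, List.In i (atomic_trace s) -> List.In i S) (g : fE B -> fE C) :
    List.Forall (fun i => inst_ok bar (imap fst i)) (map (imap (relabel g)) (atomic_trace s)).
  apply/List.Forall_map/List.Forall_forall => j /sS Hj.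
  by rewrite imap_comp (@eq_imap _ _ _ fst) //; apply: HokS.
rewrite /se_trace /tilde_trace /hat_trace !(List.Forall_app, List.Forall_cons_iff).
split; first by apply/List.Forall_map/List.Forall_forall.
split; first by split; [|split=> //; split]; apply: Htr; [apply: In_S1|apply: In_S2|apply: In_S3].
split.
  by split; [|split; [|split=> //]]; apply: Htr; [apply: In_S1|apply: In_S2|apply: In_S3].
by apply/List.Forall_map/List.Forall_forall.
Qed.

Lemma inst_ok_nonatomic X (f : X -> At) (i : inst X) : ~~ atomic i -> inst_ok bar (imap f i).
Proof. by case: i. Qed.

Lemma se_flow_witness : exists2 s,
  flow_witness (F := C) (fmap atom_top a') s (fmap atom_bot b') &
  List.Forall (fun st => inst_ok bar (imap fst st.2)) s.
Proof.
have [s [Hd Hs]] := derives_se; exists s.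
  split=> //; [exact: exact_labels_premiss|exact: exact_labels_conclusion| |].
  - by rewrite Hs; apply: realizable_se_trace.
  - by rewrite Hs; apply: count_se_trace.
apply/List.Forall_forall => -[k i] Hi /=.
case Ha: (atomic i); last exact: inst_ok_nonatomic (negbT Ha).
have := proj1 (List.Forall_forall _ _) inst_ok_se_trace i; apply.
by rewrite -Hs; apply/In_atomic_trace; exists k.
Qed.

End SEFlow.

(** * Locating the redex *)

Lemma count_cat_cons2 T (P : pred T) l1 x l2 y l3 :
  count P (l1 ++ x :: l2 ++ y :: l3) = P x + (P y + count P (l1 ++ l2 ++ l3)).
Proof.
rewrite !count_cat /= count_cat /= addnCA; congr (_ + _).
by rewrite [count P l2 + (_ + _)]addnCA addnCA.
Qed.

Lemma In_cat_cons2 T (z x y : T) l1 l2 l3 :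
  List.In z (l1 ++ l2 ++ l3) -> List.In z (l1 ++ x :: l2 ++ y :: l3).
Proof. by rewrite !List.in_app_iff /= !List.in_app_iff /=; tauto. Qed.

Lemma atomic_trace_redex X (s1 s2 s3 : seq (step X)) ci ii ck ik : atomic ii -> atomic ik ->
  atomic_trace (s1 ++ (ci, ii) :: s2 ++ (ck, ik) :: s3) =
  atomic_trace s1 ++ ii :: atomic_trace s2 ++ ik :: atomic_trace s3.
Proof.
by move=> Hi Hk; rewrite !(atomic_trace_cat, atomic_trace_cons) Hi Hk.
Qed.

Section Redex.
Variables (A : Type) (bar : A -> A).
Hypothesis bar_inv : involutive bar.
Variables (B : flow) (iota kappa : fV B) (eps : fE B).
Hypotheses (lab_iota : lab iota = VInt) (lab_kappa : lab kappa = VCut)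
  (up_eps : up eps = Some iota) (lo_eps : lo eps = Some kappa).
Local Notation XB := (A * fE B)%type.

Local Notation int_redex := (int_redex bar eps).
Local Notation cut_redex := (cut_redex bar eps).

Lemma cut_redexP ik e3 : realizes ik kappa -> inst_ok bar (imap fst ik) ->
  lo e3 = Some kappa -> e3 != eps -> exists x, cut_redex ik x e3.
Proof.
case; rewrite lab_kappa => + Hp _; case: ik Hp => // -[x1 x2] [y1 y2] Hp _ /= ok lo_e3 e3_eps.
have eps_e3 : eps != e3 by rewrite eq_sym.
case: (exact_labels2_cases Hp lo_eps lo_e3 eps_e3) => /= -[-> ->].
- by exists x1; left; rewrite ok.
- by exists y1; right; rewrite ok bar_inv.
Qed.

Lemma int_redexP ii e2 x : realizes ii iota -> inst_ok bar (imap fst ii) ->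
  up e2 = Some iota -> e2 != eps -> List.In (x, eps) (fatoms (icon ii)) -> int_redex ii x e2.
Proof.
case; rewrite lab_iota => + _ Hc; case: ii Hc => // -[x1 x2] [y1 y2] Hc _ /= ok up_e2 e2_eps Hx.
have eps_e2 : eps != e2 by rewrite eq_sym.
case: (exact_labels2_cases Hc up_eps up_e2 eps_e2) => /= -[E1 E2]; subst x2 y2.
- case: Hx => [[<-] | [[_ E] | []]]; first by left; rewrite ok.
  by rewrite E eqxx in e2_eps.
- case: Hx => [[_ E] | [[<-] | []]]; first by rewrite E eqxx in e2_eps.
  by right; rewrite ok bar_inv.
Qed.

Lemma int_redex_edges ii x e2 : int_redex ii x e2 -> realizes ii iota ->
  (forall e, up e = Some iota -> e = eps \/ e = e2) /\ (forall e, lo e <> Some iota).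
Proof.
by case=> -> [_ Hp Hc]; (split=> e; [move/(exact_labels2E Hc) => /=; tauto | move/(proj2 Hp e)]).
Qed.

Lemma cut_redex_edges ik x e3 : cut_redex ik x e3 -> realizes ik kappa ->
  (forall e, lo e = Some kappa -> e = eps \/ e = e3) /\ (forall e, up e <> Some kappa).
Proof.
by case=> -> [_ Hp Hc]; (split=> e; [move/(exact_labels2E Hp) => /=; tauto | move/(proj2 Hc e)]).
Qed.

Lemma redex_decomposition a' s b' (e2 e3 : fE B) :
  flow_witness a' s b' -> List.Forall (fun i => inst_ok bar (imap fst i)) (atomic_trace s) ->
  up e2 = Some iota -> e2 != eps -> lo e3 = Some kappa -> e3 != eps ->
  exists x s1 ci ii s2 ck ik s3,
    [/\ s = s1 ++ (ci, ii) :: s2 ++ (ck, ik) :: s3, int_redex ii x e2, cut_redex ik x e3,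
        realizes ii iota & realizes ik kappa].
Proof.
case=> Hd Hpre _ Hr Hc Hok up_e2 e2_eps lo_e3 e3_eps.
have {}Hr := proj1 (List.Forall_forall _ _) Hr.
have {}Hok := proj1 (List.Forall_forall _ _) Hok.
have realizes_at i v : List.In i (atomic_trace s) -> inst_vertex i = Some v -> realizes i v.
  by move=> Hi Hv; have [w Hw] := Hr i Hi; move: (realizes_vertex Hw); rewrite Hv => -[->].
have [ik [Hik /eqP Hvk]] : exists ik, List.In ik (atomic_trace s) /\ inst_vertex ik == Some kappa.
  by apply: count_In_gt0; rewrite Hc.
have Hrk := realizes_at _ _ Hik Hvk.
have [x Hx] := cut_redexP Hrk (Hok _ Hik) lo_e3 e3_eps.
have [ck [Hck _]] := proj1 (In_atomic_trace _ _) Hik.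
have [l1 [s3 Es']] := List.in_split _ _ Hck.
have Es : s = l1 ++ (ck, ik) :: s3 := Es'.
move: Hd; rewrite Es => /deriv_catE [m Hd1 /deriv_consE [Em _]]; subst m.
have Hxk : List.In (x, eps) (fatoms (plug ck (ipre ik))).
  by apply/In_fatoms_plug; right; case: Hx => -> /=; tauto.
case: (deriv_atom_source Hd1 Hxk) => [/In_labels /(proj2 Hpre)|]; first by rewrite up_eps.
move=> [s1 [ci [ii [s2 [El1 Hai Hxi]]]]].
have Hii : List.In ii (atomic_trace s).
  apply/In_atomic_trace; exists ci; split=> //.
  by rewrite Es El1 -catA; apply/List.in_app_iff; right; left.
have [vi Hvi] := Hr _ Hii.
have Evi : vi = iota.
  by have [_ _ [_ /(_ eps) [/(_ (In_labels Hxi))]]] := Hvi; rewrite up_eps => -[].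
subst vi; exists x, s1, ci, ii, s2, ck, ik, s3; split=> //; first by rewrite El1 -catA.
exact: int_redexP Hvi (Hok _ Hii) up_e2 e2_eps Hxi.
Qed.

Lemma redex_remainder a' b' (s1 s2 s3 : seq (step XB)) ci ii ck ik :
  flow_witness a' (s1 ++ (ci, ii) :: s2 ++ (ck, ik) :: s3) b' ->
  List.Forall (fun i => inst_ok bar (imap fst i))
    (atomic_trace (s1 ++ (ci, ii) :: s2 ++ (ck, ik) :: s3)) ->
  realizes ii iota -> realizes ik kappa ->
  let S := atomic_trace s1 ++ atomic_trace s2 ++ atomic_trace s3 in
  [/\ forall i, List.In i S -> exists v, realizes i v,
      forall v, count (fun i => inst_vertex i == Some v) S = (v != iota) && (v != kappa) &
      forall i, List.In i S -> inst_ok bar (imap fst i)].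
Proof.
move=> [_ _ _ Hr Hc] Hok Hri Hrk S.
have atomic_of i v : realizes i v -> atomic i by case=> Hl _ _; rewrite /atomic Hl.
have Tr := atomic_trace_redex s1 s2 s3 ci ck (atomic_of _ _ _ _ Hri) (atomic_of _ _ _ _ Hrk).
rewrite Tr in Hr Hc Hok.
have iota_kappa : iota != kappa by apply/eqP => E; move: lab_iota; rewrite E lab_kappa.
split=> [i Hi|v|i Hi].
- by apply: (proj1 (List.Forall_forall _ _) Hr); apply: In_cat_cons2.
- move: (Hc v); rewrite count_cat_cons2 (realizes_vertex Hri) (realizes_vertex Hrk).
  rewrite !(inj_eq Some_inj) -/S.
  have kappa_iota : (kappa == iota) = false by rewrite eq_sym (negbTE iota_kappa).
  case: (eqVneq v iota) => [->|iv]; first by rewrite kappa_iota add1n add0n => -[->].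
  case: (eqVneq v kappa) => [->|kv]; first by rewrite add0n add1n => -[->].
  by rewrite !add0n.
- by apply: (proj1 (List.Forall_forall _ _) Hok); apply: In_cat_cons2.
Qed.

Lemma se_witness (e2 e3 : fE (del_flow iota kappa eps)) a' s b' :
  up (val e2) = Some iota -> lo (val e3) = Some kappa -> flow_witness a' s b' ->
  List.Forall (fun i => inst_ok bar (imap fst i)) (atomic_trace s) ->
  exists2 s', flow_witness (F := se_build e2 e3)
                (fmap (relabel (edge_top e2 e3)) a') s' (fmap (relabel (edge_bot e2 e3)) b') &
              List.Forall (fun st => inst_ok bar (imap fst st.2)) s'.
Proof.
move=> up_e2 lo_e3 Hw Hok.
have [x [s1 [ci [ii [s2 [ck [ik [s3 [Es Hii Hik Hri Hrk]]]]]]]]] :=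
  redex_decomposition Hw Hok up_e2 (valP e2) lo_e3 (valP e3).
subst s; have [Hd Hpre Hcon _ _] := Hw.
have [HrS HcntS HokS] := redex_remainder Hw Hok Hri Hrk.
have [m1 Hd1 /deriv_consE [Em1 Hd']] := deriv_catE Hd; subst m1.
have [m2 Hd2 /deriv_consE [Em2 Hd3]] := deriv_catE Hd'; subst m2.
have [up_i lo_i] := int_redex_edges Hii Hri.
have [lo_k up_k] := cut_redex_edges Hik Hrk.
exact: (se_flow_witness up_eps lo_eps up_e2 lo_e3 up_i lo_k up_k lo_i Hd1 Hd2 Hd3 Hii Hik
  Hpre Hcon HrS HcntS HokS).
Qed.
End Redex.

Theorem theorem5p3 (A : Type) (bar : A -> A)
  (bar_inv : involutive bar) (bar_nofix : forall a, bar a <> a)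
  (B C : flow) (a b : fml A) (s : seq (step A)) :
  se_red B C -> sks_deriv bar a s b -> flow_of a s B ->
  exists s' : seq (step A), sks_deriv bar a s' b /\ flow_of a s' C.
Proof.
move=> [_ [iota [kappa [eps [e2 [e3 [[lab_i lab_k up_eps lo_eps] [up_e2 lo_e3 iso]]]]]]]].
move=> [Hd Hok] /witness_of_flow [a' [s' [b' [Ea Es Hw]]]]; subst a s.
have Hd' : deriv a' s' b' by case: Hw.
have Eb : fmap fst b' = b := deriv_fun (deriv_fmap fst Hd') Hd.
subst b.
have Hok' := inst_ok_atomic_trace Hok.
have [t Ht Hokt] := se_witness bar_inv lab_i lab_k up_eps lo_eps up_e2 lo_e3 Hw Hok'.
exists (map (smap fst) t); split; last first.
  apply: flow_of_iso iso _; rewrite -(fmap_fst_relabel (edge_top e2 e3)).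
  exact: flow_of_witness Ht.
split; last exact: inst_ok_nth_smap_fst.
rewrite -(fmap_fst_relabel (edge_top e2 e3)) -(fmap_fst_relabel (edge_bot e2 e3)).
by case: Ht => Hdt _ _ _ _; apply: deriv_fmap.
Qed.
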